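(* Let $(p,q)$ be a piecewise elementary pair of partial isomorphisms of $\mathbb{QU}_{\prec}$ and suppose the triple $(p',q',w)$ liberates $p$ in $(p,q)$. Let $u$ be a reduced word that is either empty or of the form $u=t^nv$ ($n\neq0$, product reduced) such that $uw$ is reduced. Then there are partial isomorphisms $p''\supseteq p'$, $q''\supseteq q'$ of $\mathbb{QU}_{\prec}$ such that $(p'',q'',uw)$ liberates $p$ in $(p,q)$. The same holds with $p,q$ and $s,t$ interchanged (liberating $q$, with $u$ empty or $u=s^mv$, $m\ne0$).
   Context: $\mathbb{QU}_{\prec}$ is the Fraïssé limit of the class of finite ordered metric spaces (metric spaces with an arbitrary linear order) with rational distances; denote its linear order by $<$. A partial isomorphism of $\mathbb{QU}_{\prec}$ is an isometric order-preserving bijection $p$ between finite subsets $\mathrm{dom}(p),\mathrm{ran}(p)$; $p'\supseteq p$ means $p'$ extends $p$; intervals are taken with respect to $<$; $p|_I$ is the restriction of $p$ to $I\cap\mathrm{dom}(p)$; $\mathrm{Fix}(p)=\{c\in\mathrm{dom}(p):p(c)=c\}$. An open interval $(a,b)$ is $p$-increasing if $a,b\in\mathrm{dom}(p)$, $p(a)=a$, $p(b)=b$ and $p(c)>c$ for all $c\in\mathrm{dom}(p)\cap(a,b)$; $p$-decreasing likewise with $p(c)<c$; $p$-monotone means either. Writing $\mathrm{dom}(p)=\{a_0<\dots<a_n\}$, $p$ is informative if $p(a_0)=a_0$, $p(a_n)=a_n$ and there are indices $0=i_0<\dots<i_r=n$ with $p(a_{i_k})=a_{i_k}$ and each $(a_{i_k},a_{i_{k+1}})$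 $p$-monotone; then $\mathrm{Ess}(p)=(\mathrm{dom}(p)\cup\mathrm{ran}(p))\setminus\{a_0,a_n\}$. A pair $(p,q)$ is piecewise elementary if $p,q$ are informative, $\min\mathrm{dom}(p)=\min\mathrm{dom}(q)$ and $\max\mathrm{dom}(p)=\max\mathrm{dom}(q)$; it is elementary if moreover $\mathrm{Fix}(p)\cap\mathrm{Fix}(q)$ consists only of this min and max. Words: $F(s,t)$ free group; for reduced $w=t^{n_k}s^{m_k}\cdots t^{n_1}s^{m_1}$, $w(p,q)(c)=q^{n_k}p^{m_k}\cdots q^{n_1}p^{m_1}(c)$ when defined (rightmost letter acts first); ''$w=t^nv$'' means the product is reduced. Liberation for elementary pairs: a triple $(p',q',w)$ with $p'\supseteq p$, $q'\supseteq q$ partial isomorphisms and $w$ reduced liberates $p$ in $(p,q)$ if: (i) $p',q'$ are informative; (ii) $\min\mathrm{dom}(p')=\min\mathrm{dom}(p)$, $\min\mathrm{dom}(q')=\min\mathrm{dom}(q)$, $\max\mathrm{dom}(p')=\max\mathrm{dom}(p)$, $\max\mathrm{dom}(q')=\max\mathrm{dom}(q)$; (iii) $w=t^nv$ with $n\neq0$; (iv) $w(p',q')(c)$ is defined for all $c\in\mathrm{Ess}(p)\cup\mathrm{Ess}(q)$ and $w(p',q')(\min(\mathrm{Ess}(p)\cup\mathrm{Ess}(q)))>\max\mathrm{Ess}(p')$; (v) there is an open interval $J$ whose right endpoint is $\max\mathrm{dom}(q)$, with $w(p',q')(c)\in J$ for all $c\in\mathrm{Ess}(p)\cup\mathrm{Ess}(q)$,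 and $J$ is $q'$-increasing if $n>0$ and $q'$-decreasing if $n<0$. It liberates $q$ if the same holds with roles of $p,q$ and of $s,t$ interchanged. Liberation for piecewise elementary pairs: let $a_0<\dots<a_m$ enumerate $\mathrm{Fix}(p)\cap\mathrm{Fix}(q)$ and $I_j=[a_j,a_{j+1}]$; $(p',q',w)$ liberates $p$ [resp. $q$] in $(p,q)$ if the min/max conditions (ii) hold and for every $j<m$ the triple $(p'|_{I_j},q'|_{I_j},w)$ liberates $p|_{I_j}$ [resp. $q|_{I_j}$] in $(p|_{I_j},q|_{I_j})$. *)

From mathcomp Require Import all_boot all_order all_algebra.
Set Implicit Arguments. Unset Strict Implicit. Unset Printing Implicit Defensive.
Import Order.TTheory GRing.Theory Num.Theory.
Local Open Scope ring_scope.

Section QUo.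
Variables (M : eqType) (d : M -> M -> rat) (lt : rel M).

(** ** The ordered rational Urysohn space QU_< (characterised up to
    isomorphism as the countable structure with the extension property). *)
Definition is_rat_metric : Prop :=
  (forall x y, d x y = 0 <-> x = y) /\
  (forall x y, d x y = d y x) /\
  (forall x y z, d x z <= d x y + d y z).

Definition is_strict_linear_order : Prop :=
  (forall x, ~~ lt x x) /\
  (forall x y z, lt x y -> lt y z -> lt x z) /\
  (forall x y, x != y -> lt x y || lt y x).

(** one-point extension property: every abstract one-point extension
    (distances [r], position in the order given by the downward closed cut [L])
    of a finite subset [A] is realised in M. *)
Definition extension_property : Prop :=
  forall (A : seq M) (r : M -> rat) (L : pred M),
    (forall a, a \in A -> 0 < r a) ->
    (forall a b, a \in A -> b \in A -> d a b <= r a + r b /\ r a <= d a b + r b) ->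
    (forall a b, a \in A -> b \in A -> L a -> lt b a -> L b) ->
    exists x : M, forall a, a \in A -> d a x = r a /\ lt a x = L a.

Definition countable_type : Prop := exists f : nat -> M, forall x, exists n, f n = x.

Definition is_QUo : Prop :=
  [/\ is_rat_metric, is_strict_linear_order, extension_property & countable_type].

(** ** Partial isomorphisms, represented by their finite graphs. *)
Definition pgraph := seq (M * M).
Definition dom (p : pgraph) : seq M := map fst p.
Definition ran (p : pgraph) : seq M := map snd p.

Fixpoint papp (p : pgraph) (c : M) : option M :=
  match p with
  | [::] => None
  | (a, b) :: p' => if a == c then Some b else papp p' c
  end.

Definition pinv (p : pgraph) : pgraph := map (fun ab => (ab.2, ab.1)) p.

Definition partial_iso (p : pgraph) : Prop :=
  uniq (dom p) /\ uniq (ran p) /\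
  forall x1 y1 x2 y2, (x1, y1) \in p -> (x2, y2) \in p ->
    d x1 x2 = d y1 y2 /\ lt x1 x2 = lt y1 y2.

Definition pext (p' p : pgraph) : Prop := {subset p <= p'}.

Definition fixb (p : pgraph) (c : M) : bool := papp p c == Some c.

Definition is_dmin (p : pgraph) (a : M) : bool :=
  (a \in dom p) && all (fun c => (c == a) || lt a c) (dom p).
Definition is_dmax (p : pgraph) (a : M) : bool :=
  (a \in dom p) && all (fun c => (c == a) || lt c a) (dom p).

Definition same_min (p q : pgraph) : Prop := exists a, is_dmin p a /\ is_dmin q a.
Definition same_max (p q : pgraph) : Prop := exists a, is_dmax p a /\ is_dmax q a.

Definition p_increasing (p : pgraph) (a b : M) : Prop :=
  a \in dom p /\ b \in dom p /\ fixb p a /\ fixb p b /\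
  forall c, c \in dom p -> lt a c -> lt c b ->
    exists2 e, papp p c = Some e & lt c e.
Definition p_decreasing (p : pgraph) (a b : M) : Prop :=
  a \in dom p /\ b \in dom p /\ fixb p a /\ fixb p b /\
  forall c, c \in dom p -> lt a c -> lt c b ->
    exists2 e, papp p c = Some e & lt e c.
Definition p_monotone (p : pgraph) (a b : M) : Prop :=
  p_increasing p a b \/ p_decreasing p a b.

(** informative: the chosen fixed points a_{i_0} < ... < a_{i_r}, from
    min dom p to max dom p, with consecutive open intervals p-monotone *)
Definition informative (p : pgraph) : Prop :=
  exists (a0 : M) (s : seq M),
    is_dmin p a0 /\ is_dmax p (last a0 s) /\ fixb p a0 /\
    all (fun c => (c \in dom p) && fixb p c) s /\
    path lt a0 s /\
    (forall i, (i < size s)%N ->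
       p_monotone p (nth a0 (a0 :: s) i) (nth a0 s i)).

Definition ess (p : pgraph) (c : M) : bool :=
  ((c \in dom p) || (c \in ran p)) && ~~ is_dmin p c && ~~ is_dmax p c.

Definition piecewise_elementary (p q : pgraph) : Prop :=
  informative p /\ informative q /\ same_min p q /\ same_max p q.

Definition elementary (p q : pgraph) : Prop :=
  piecewise_elementary p q /\
  forall c, fixb p c -> fixb q c -> is_dmin p c || is_dmax p c.

(** ** Words of F(s,t) at the letter level: (false, _) = s, (true, _) = t;
    the second component is [true] for the inverse letter.  The head of the
    list is the leftmost letter (which acts last). *)
Definition letter := (bool * bool)%type.
Definition word := seq letter.

Definition reduced (w : word) : bool :=
  path (fun x y : letter => ~~ ((x.1 == y.1) && (x.2 != y.2))) (head (false, false) w) (behead w).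

Definition gpow (b : bool) (n : int) : word :=
  nseq `|n|%N (b, n < 0).
Definition tpow := gpow true.
Definition spow := gpow false.

Definition swapw (w : word) : word := map (fun x : letter => (~~ x.1, x.2)) w.

Definition act_letter (p q : pgraph) (x : letter) (c : M) : option M :=
  let r := if x.1 then q else p in papp (if x.2 then pinv r else r) c.

(** w(p,q)(c), rightmost letter first *)
Definition weval (w : word) (p q : pgraph) (c : M) : option M :=
  foldr (fun x acc => obind (act_letter p q x) acc) (Some c) w.

Definition restr (p : pgraph) (a b : M) : pgraph :=
  filter (fun xy => ((a == xy.1) || lt a xy.1) && ((xy.1 == b) || lt xy.1 b)) p.

Definition elib (p q p' q' : pgraph) (w : word) : Prop :=
  partial_iso p' /\ partial_iso q' /\ pext p' p /\ pext q' q /\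
  informative p' /\ informative q' /\
  same_min p' p /\ same_min q' q /\ same_max p' p /\ same_max q' q /\
  reduced w /\
  exists (n : int) (v : word), n != 0 /\ w = tpow n ++ v /\
  (forall c, ess p c || ess q c -> exists e, weval w p' q' c = Some e) /\
  (forall c0, ess p c0 || ess q c0 ->
     (forall c, ess p c || ess q c -> (c == c0) || lt c0 c) ->
     forall e0, weval w p' q' c0 = Some e0 ->
     forall x, ess p' x -> lt x e0) /\
  exists j1 j2, is_dmax q j2 /\
    (forall c e, ess p c || ess q c -> weval w p' q' c = Some e ->
       lt j1 e /\ lt e j2) /\
    (0 < n -> p_increasing q' j1 j2) /\ (n < 0 -> p_decreasing q' j1 j2).

Definition elib_q (p q p' q' : pgraph) (w : word) : Prop :=
  elib q p q' p' (swapw w).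

Definition consec_fix (p q : pgraph) (a b : M) : Prop :=
  fixb p a /\ fixb q a /\ fixb p b /\ fixb q b /\ lt a b /\
  forall c, fixb p c -> fixb q c -> ~ (lt a c /\ lt c b).

Definition liberates_p (p q p' q' : pgraph) (w : word) : Prop :=
  partial_iso p' /\ partial_iso q' /\ pext p' p /\ pext q' q /\
  same_min p' p /\ same_min q' q /\ same_max p' p /\ same_max q' q /\
  forall a b, consec_fix p q a b ->
    elib (restr p a b) (restr q a b) (restr p' a b) (restr q' a b) w.

Definition liberates_q (p q p' q' : pgraph) (w : word) : Prop :=
  partial_iso p' /\ partial_iso q' /\ pext p' p /\ pext q' q /\
  same_min p' p /\ same_min q' q /\ same_max p' p /\ same_max q' q /\
  forall a b, consec_fix p q a b ->
    elib_q (restr p a b) (restr q a b) (restr p' a b) (restr q' a b) w.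

End QUo.

From mathcomp Require Import all_boot all_order all_algebra lra.
Set Implicit Arguments. Unset Strict Implicit. Unset Printing Implicit Defensive.
Import Order.TTheory GRing.Theory Num.Theory.
Local Open Scope ring_scope.

(* Liberation only concerns the gaps (a, b) between consecutive common fixed points of p and
   q, and every point we add lies inside the gap that needs it, so the gaps are handled
   independently. Inside a gap the letters of u are prepended one at a time, keeping the
   images of the essential points in an interval (j, b) on which the leading letter moves
   points up, and above every point of the other generator. For a letter of the same
   generator, each image is sent further up by a one-point extension of the partial
   isomorphism (Katetov's construction realised by the extension property of QU_<). For a
   letter of the other generator, we first add a new fixed point f of that generator just
   above all of its points below b; no point of that generator lies in (f, b), and the
   images lie above f, so they can then be sent up in the same way. *)

Section Words.
Implicit Types (l : letter) (W : word).

Lemma reduced_behead l W : reduced (l :: W) -> reduced W.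
Proof. by rewrite /reduced; case: W => //= l' W /andP []. Qed.

Lemma reduced_same_gen l l' W : reduced [:: l, l' & W] -> l.1 = l'.1 -> l = l'.
Proof.
rewrite /reduced /= => /andP [+ _] e; rewrite e eqxx /= negbK => /eqP.
by case: l l' e => [x1 x2] [y1 y2] /= -> ->.
Qed.

Lemma tpow_cons (n : int) (v : word) : n != 0 -> exists W, tpow n ++ v = (true, n < 0) :: W.
Proof.
rewrite -absz_eq0 /tpow /gpow; case: `|n|%N => // k _.
by exists (nseq k (true, n < 0) ++ v).
Qed.

Lemma reduced_swapw W : reduced (swapw W) = reduced W.
Proof.
case: W => [|x W] //=; rewrite /reduced /= path_map; apply: eq_path => y z /=.
by rewrite (inj_eq negb_inj).
Qed.

Lemma swapw_cat (u w : word) : swapw (u ++ w) = swapw u ++ swapw w.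
Proof. exact: map_cat. Qed.

Lemma swapw_spow (m : int) : swapw (spow m) = tpow m.
Proof. by rewrite /swapw /spow /gpow map_nseq. Qed.

End Words.

Section OrderedMetricSpace.
Variables (M : eqType) (d : M -> M -> rat) (lt : rel M).
Hypotheses (lt_order : is_strict_linear_order lt) (d_metric : is_rat_metric d).
Hypothesis extP : extension_property d lt.
Local Notation piso := (partial_iso d lt).
Implicit Types (g : pgraph M).

Definition leM x y := ~~ lt y x.

Lemma ltMxx x : ~~ lt x x. Proof. by case: lt_order. Qed.

Lemma ltM_trans x y z : lt x y -> lt y z -> lt x z.
Proof. by case: lt_order => _ [+ _]; apply. Qed.

Lemma ltM_total x y : x != y -> lt x y || lt y x.
Proof. by case: lt_order => _ [_]; apply. Qed.

Lemma ltMW x y : lt x y -> leM x y.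
Proof. by move=> xy; apply/negP => /(ltM_trans xy); rewrite (negbTE (ltMxx x)). Qed.

Lemma leMxx x : leM x x. Proof. exact: ltMxx. Qed.

Lemma leM_eqVlt x y : leM x y = (x == y) || lt x y.
Proof.
apply/idP/idP => [nyx|/orP [/eqP ->|/ltMW //]]; last exact: leMxx.
by case: eqP => //= /eqP /ltM_total; rewrite (negbTE nyx) orbF.
Qed.

Lemma ltM_leM_neq x y : x != y -> lt x y = leM x y.
Proof. by move=> /negbTE xy; rewrite leM_eqVlt xy. Qed.

Lemma leM_ltM_trans x y z : leM x y -> lt y z -> lt x z.
Proof. by rewrite leM_eqVlt => /orP [/eqP ->|xy /(ltM_trans xy)]. Qed.

Lemma ltM_leM_trans x y z : lt x y -> leM y z -> lt x z.
Proof. by move=> xy; rewrite leM_eqVlt => /orP [/eqP <-|/(ltM_trans xy)]. Qed.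

Lemma leM_trans x y z : leM x y -> leM y z -> leM x z.
Proof.
by rewrite [leM x y]leM_eqVlt => /orP [/eqP ->|xy /(ltM_leM_trans xy) /ltMW].
Qed.

Lemma leM_anti x y : leM x y -> leM y x -> x = y.
Proof. by rewrite leM_eqVlt => /orP [/eqP //|xy]; rewrite /leM xy. Qed.

Lemma exists_minimal (cs : seq M) : cs != [::] ->
  exists2 c0, c0 \in cs & forall c, c \in cs -> leM c0 c.
Proof.
elim: cs => // x [_ _|y cs IH _].
  by exists x => [|c /[1!inE] /eqP ->]; rewrite ?mem_head ?leMxx.
have [c0 c0s min] := IH isT.
case: (boolP (lt c0 x)) => [c0x|xc0].
  exists c0; first by rewrite inE c0s orbT.
  by move=> c /[1!inE] /orP [/eqP ->|/min //]; apply: ltMW.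
exists x; first exact: mem_head.
by move=> c /[1!inE] /orP [/eqP ->|/min]; [apply: leMxx|apply: leM_trans].
Qed.

Lemma d_xx x : d x x = 0. Proof. by case: d_metric => /(_ x x) [_ ->]. Qed.
Lemma d_eq0 x y : d x y = 0 -> x = y. Proof. by case: d_metric => /(_ x y) []. Qed.
Lemma d_sym x y : d x y = d y x. Proof. by case: d_metric => _ []. Qed.
Lemma d_triangle x y z : d x z <= d x y + d y z. Proof. by case: d_metric => _ []. Qed.

Lemma d_ge0 x y : 0 <= d x y.
Proof.
have := d_triangle x y x; rewrite d_xx (d_sym y x) -mulr2n -mulr_natl.
by rewrite pmulr_rge0.
Qed.

Lemma d_gt0 x y : x != y -> 0 < d x y.
Proof. by move=> xy; rewrite lt_def d_ge0 andbT; apply: contra xy => /eqP /d_eq0 ->. Qed.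

Lemma mem_dom g x y : (x, y) \in g -> x \in dom g.
Proof. by move=> h; apply/mapP; exists (x, y). Qed.

Lemma mem_ran g x y : (x, y) \in g -> y \in ran g.
Proof. by move=> h; apply/mapP; exists (x, y). Qed.

Lemma domP g x : x \in dom g -> exists y, (x, y) \in g.
Proof. by case/mapP=> [[a b] h /= ->]; exists b. Qed.

Lemma ranP g y : y \in ran g -> exists x, (x, y) \in g.
Proof. by case/mapP=> [[a b] h /= ->]; exists a. Qed.

Lemma papp_mem g c e : papp g c = Some e -> (c, e) \in g.
Proof.
elim: g => //= [[x y] g IH]; rewrite inE; case: eqP => [-> [->]|_ /IH ->].
  by rewrite eqxx.
by rewrite orbT.
Qed.

Lemma mem_papp g c e : uniq (dom g) -> (c, e) \in g -> papp g c = Some e.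
Proof.
elim: g => //= [[x y] g IH] /andP [xg ug]; rewrite inE => /orP [/eqP [-> ->]|h].
  by rewrite eqxx.
case: eqP => [xc|_]; last exact: IH.
by move: xg; rewrite xc (mem_dom h).
Qed.

Lemma mem_pinv g x y : ((x, y) \in pinv g) = ((y, x) \in g).
Proof. by apply/mapP/idP => [[[a b] h [-> ->]] //|h]; exists (y, x). Qed.

Lemma dom_pinv g : dom (pinv g) = ran g.
Proof. by rewrite /dom /ran /pinv -map_comp. Qed.

Lemma ran_pinv g : ran (pinv g) = dom g.
Proof. by rewrite /dom /ran /pinv -map_comp; apply: eq_map => -[]. Qed.

Lemma pinv_cat g h : pinv (g ++ h) = pinv g ++ pinv h.
Proof. exact: map_cat. Qed.

Lemma pinvK g : pinv (pinv g) = g.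
Proof. by rewrite /pinv -map_comp map_id_in // => -[]. Qed.

Lemma pext_cat g n : pext (g ++ n) g.
Proof. by move=> x xg; rewrite mem_cat xg. Qed.

Definition pts g := dom g ++ ran g.

Lemma mem_pts_dom g x y : (x, y) \in g -> x \in pts g.
Proof. by move=> h; rewrite mem_cat (mem_dom h). Qed.

Lemma mem_pts_ran g x y : (x, y) \in g -> y \in pts g.
Proof. by move=> h; rewrite mem_cat (mem_ran h) orbT. Qed.

Lemma pts_pinv g x : (x \in pts (pinv g)) = (x \in pts g).
Proof. by rewrite !mem_cat dom_pinv ran_pinv orbC. Qed.

Lemma partial_iso_uniq_dom g : piso g -> uniq (dom g). Proof. by case. Qed.

Lemma partial_iso_d g x y x' y' : piso g -> (x, y) \in g -> (x', y') \in g ->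
  d x x' = d y y'.
Proof. by case=> _ [_ H] /H h /h []. Qed.

Lemma partial_iso_lt g x y x' y' : piso g -> (x, y) \in g -> (x', y') \in g ->
  lt x x' = lt y y'.
Proof. by case=> _ [_ H] /H h /h []. Qed.

Lemma partial_iso_papp g c e : piso g -> (c, e) \in g -> papp g c = Some e.
Proof. by move/partial_iso_uniq_dom; apply: mem_papp. Qed.

Lemma partial_iso_pinv g : piso g -> piso (pinv g).
Proof.
case=> [ud [ur H]]; split; first by rewrite dom_pinv.
split; first by rewrite ran_pinv.
by move=> x1 y1 x2 y2; rewrite !mem_pinv => /H h /h [-> ->].
Qed.

Lemma partial_iso_subseq g h : piso h -> subseq g h -> piso g.
Proof.
case=> [ud [ur H]] gh; split; first exact: subseq_uniq (map_subseq _ gh) ud.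
split; first exact: subseq_uniq (map_subseq _ gh) ur.
by move=> x1 y1 x2 y2 /(mem_subseq gh) h1 /(mem_subseq gh); apply: H.
Qed.

Lemma partial_iso_fix_lt g a x y : piso g -> (a, a) \in g -> (x, y) \in g ->
  lt a x = lt a y /\ lt x a = lt y a.
Proof. by move=> pg ha hx; rewrite (partial_iso_lt pg ha hx) (partial_iso_lt pg hx ha). Qed.

Lemma partial_iso_rcons g x y :
  piso g -> x \notin dom g -> y \notin ran g ->
  (forall z w, (z, w) \in g -> d z x = d w y /\ lt z x = lt w y) ->
  piso (g ++ [:: (x, y)]).
Proof.
case=> [ud [ur H]] xg yg Hxy.
split; first by rewrite /dom map_cat cat_uniq ud /= orbF andbT.
split; first by rewrite /ran map_cat cat_uniq ur /= orbF andbT.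
have xz z w : (z, w) \in g -> x != z by move/mem_dom => zg; apply: contraNneq xg => ->.
have yw z w : (z, w) \in g -> y != w by move/mem_ran => wg; apply: contraNneq yg => ->.
move=> x1 y1 x2 y2; rewrite !mem_cat !inE.
case/orP=> [h1|/eqP [-> ->]]; case/orP=> [h2|/eqP [-> ->]].
- exact: H.
- exact: Hxy.
- have [e1 e2] := Hxy _ _ h2; split; first by rewrite d_sym // e1 d_sym.
  by rewrite (ltM_leM_neq (xz _ _ h2)) (ltM_leM_neq (yw _ _ h2)) /leM e2.
- by rewrite !d_xx !(negbTE (ltMxx _)).
Qed.

(** * One-point extensions *)

Lemma fresh_point (A : seq M) (L : pred M) :
  (forall a1 a2, L a1 -> lt a2 a1 -> L a2) ->
  exists f, [/\ f \notin A, (forall a1 a2, a1 \in A -> a2 \in A -> d a1 f = d a2 f) &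
             forall a, a \in A -> lt a f = L a].
Proof.
move=> HL; set D := [seq d x y | x <- A, y <- A].
pose K : rat := 1 + \big[Order.max/0]_(r <- D) r.
have K_gt0 : 0 < K by rewrite ltr_pwDl // bigmax_ge_id.
have dK a b : a \in A -> b \in A -> d a b <= K.
  move=> ha hb; have hD : d a b \in D by apply: allpairs_f.
  by apply: le_trans (le_bigmax_seq 0 _ xpredT id hD erefl) _; rewrite lerDr.
have K_ok a b : a \in A -> b \in A -> d a b <= K + K /\ K <= d a b + K.
  move=> ha hb; rewrite lerDr d_ge0; split => //.
  by apply: le_trans (dK _ _ ha hb) _; rewrite lerDr ltW.
have [f Hf] := extP (r := fun _ => K) (fun _ _ => K_gt0) K_ok (fun a b _ _ => HL a b).
exists f; split.
- by apply/negP => /Hf [+ _]; rewrite d_xx => K0; move: K_gt0; rewrite -K0 ltxx.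
- by move=> a1 a2 /Hf [-> _] /Hf [-> _].
- by move=> a /Hf [].
Qed.

(* Katetov's construction: [y] realises the distances [min_{(z, w) in g} (d x z + d w a)]. *)
Lemma partial_iso_extend g (g0 : M * M) x (L : pred M) (A : seq M) :
  g0 \in g -> piso g -> x \notin dom g ->
  (forall a1 a2, L a1 -> lt a2 a1 -> L a2) ->
  (forall z w, (z, w) \in g -> L w = lt z x) ->
  exists y, piso (g ++ [:: (x, y)]) /\ forall a, a \in A -> lt a y = L a.
Proof.
case: g0 => z0 w0 g0g pg xg HL Lg; pose f a (pr : M * M) := d x pr.1 + d pr.2 a.
pose r a := \big[Order.min/f a (z0, w0)]_(pr <- g) f a pr.
have r_le a z w : (z, w) \in g -> r a <= d x z + d w a.
  by move=> h; apply: (ge_bigmin_seq _ _ _ _ h erefl).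
have r_attained a : exists z w, (z, w) \in g /\ r a = d x z + d w a.
  rewrite /r big_seq; elim/big_ind: _ => [|u v [z [w [h ->]]] [z' [w' [h' ->]]]|[z w] h].
  - by exists z0, w0.
  - by case: leP => _; [exists z, w|exists z', w'].
  - by exists z, w; split.
have r_gt0 a : 0 < r a.
  have [z [w [h ->]]] := r_attained a; rewrite ltr_pwDl ?d_ge0 // d_gt0 //.
  by apply: contraNneq xg => ->; apply: mem_dom h.
have r_ran z w : (z, w) \in g -> r w = d x z.
  move=> h; apply/le_anti; rewrite (le_trans (r_le _ _ _ h)) ?d_xx ?addr0 //=.
  have [z' [w' [h' ->]]] := r_attained w.
  by rewrite -(partial_iso_d pg h' h) d_triangle.
have katetov a1 a2 : a1 \in A ++ ran g -> a2 \in A ++ ran g ->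
    d a1 a2 <= r a1 + r a2 /\ r a1 <= d a1 a2 + r a2.
  move=> _ _; have [z2 [w2 [h2 ->]]] := r_attained a2; split.
    have [z1 [w1 [h1 ->]]] := r_attained a1.
    have := partial_iso_d pg h1 h2; have := d_triangle a1 w1 a2.
    have := d_triangle w1 w2 a2; have := d_triangle z1 x z2.
    rewrite (d_sym a1 w1) (d_sym z1 x) => *; lra.
  have := r_le a1 _ _ h2; have := d_triangle w2 a2 a1; rewrite (d_sym a2 a1) => *; lra.
have [y Hy] := extP (fun a _ => r_gt0 a) katetov (fun a1 a2 _ _ => HL a1 a2).
have yA : y \notin A ++ ran g.
  by apply/negP => /Hy [+ _]; rewrite d_xx => r0; move: (r_gt0 y); rewrite -r0 ltxx.
have wA z w : (z, w) \in g -> w \in A ++ ran g by move=> h; rewrite mem_cat (mem_ran h) orbT.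
exists y; split.
  apply: partial_iso_rcons => //; first by apply: contra yA; rewrite mem_cat orbC => ->.
  move=> z w h; have [dwy lwy] := Hy _ (wA _ _ h).
  by rewrite dwy lwy (r_ran _ _ h) (Lg _ _ h) d_sym.
by move=> a ha; apply: (Hy a _).2; rewrite mem_cat ha.
Qed.

Lemma extend_above g x b (S : seq M) :
  piso g -> x \notin dom g -> (b, b) \in g -> lt x b -> x \in S ->
  (forall z w, (z, w) \in g -> lt x z -> forall s, s \in S -> lt s w) ->
  exists y, [/\ piso (g ++ [:: (x, y)]), forall s, s \in S -> lt s y & lt y b].
Proof.
move=> pg xg bg xb xS HS; set T := S ++ [seq pr.2 | pr <- g & lt pr.1 x].
pose L a := has (leM a) T.
have HL a1 a2 : L a1 -> lt a2 a1 -> L a2.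
  by move=> /hasP [s sT a1s] a21; apply/hasP; exists s => //; apply: leM_trans (ltMW a21) a1s.
have Lg z w : (z, w) \in g -> L w = lt z x.
  move=> h; case: (boolP (lt z x)) => zx.
    apply/hasP; exists w; last exact: leMxx.
    by rewrite mem_cat; apply/orP; right; apply/mapP; exists (z, w); rewrite // mem_filter zx.
  have xz : lt x z.
    by rewrite ltM_leM_neq //; apply: contraNneq xg => ->; apply: mem_dom h.
  apply/negbTE/hasP => -[s]; rewrite mem_cat => /orP [sS|/mapP [[z' w'] + ->]].
    by rewrite /leM (HS _ _ h xz _ sS).
  rewrite mem_filter /= => /andP [z'x h'].
  by rewrite /leM -(partial_iso_lt pg h' h) (ltM_trans z'x xz).
have [y [py Hy]] := partial_iso_extend T bg pg xg HL Lg.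
exists y; split => //.
  by move=> s sS; rewrite Hy ?mem_cat ?sS //; apply/hasP; exists s; rewrite ?mem_cat ?sS ?leMxx.
have xy : (x, y) \in g ++ [:: (x, y)] by rewrite mem_cat mem_head orbT.
by rewrite -(partial_iso_lt py xy (_ : (b, b) \in _)) // mem_cat bg.
Qed.

Lemma fixed_point_in_cut g (L : pred M) (T : seq M) : piso g ->
  (forall a1 a2, L a1 -> lt a2 a1 -> L a2) -> (forall z w, (z, w) \in g -> L z = L w) ->
  (forall t, t \in T -> ~~ L t) ->
  exists f, [/\ f \notin pts g, piso (g ++ [:: (f, f)]),
                forall z, z \in pts g -> lt z f = L z & forall t, t \in T -> lt f t].
Proof.
move=> pg HL Lg LT; have [f [fA fd fL]] := fresh_point (pts g ++ T) HL.
have inA z : z \in pts g -> z \in pts g ++ T by rewrite mem_cat => ->.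
exists f; split; first by apply: contra fA => /inA.
- apply: partial_iso_rcons => //.
  + by apply: contra fA; rewrite !mem_cat => ->.
  + by apply: contra fA; rewrite !mem_cat => ->; rewrite orbT.
  move=> z w zw; have zA := inA _ (mem_pts_dom zw); have wA := inA _ (mem_pts_ran zw).
  by rewrite (fd _ _ zA wA) !fL // (Lg _ _ zw).
- by move=> z /inA /fL.
- move=> t tT; have tA : t \in pts g ++ T by rewrite mem_cat tT orbT.
  rewrite ltM_leM_neq /leM ?fL ?LT //.
  by apply: contraNneq fA => ->.
Qed.

Lemma mem_restr g a b x y :
  ((x, y) \in restr lt g a b) = [&& (x, y) \in g, leM a x & leM x b].
Proof. by rewrite /restr mem_filter /= !leM_eqVlt andbC andbA. Qed.

Lemma restr_sub g a b : pext g (restr lt g a b).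
Proof. by case=> x y; rewrite mem_restr => /andP []. Qed.

Lemma pext_restr g g' a b : pext g' g -> pext (restr lt g' a b) (restr lt g a b).
Proof. by move=> gg' [x y]; rewrite !mem_restr => /andP [/gg' ->]. Qed.

Lemma partial_iso_restr g a b : piso g -> piso (restr lt g a b).
Proof. by move/partial_iso_subseq; apply; apply: filter_subseq. Qed.

Lemma dom_restr g a b x : x \in dom (restr lt g a b) -> leM a x && leM x b.
Proof. by case/domP => y; rewrite mem_restr => /and3P [_ -> ->]. Qed.

Lemma partial_iso_fix_leM g a x y : piso g -> (a, a) \in g -> (x, y) \in g ->
  leM a x = leM a y /\ leM x a = leM y a.
Proof. by move=> pg ha hx; have [e1 e2] := partial_iso_fix_lt pg ha hx; rewrite /leM e1 e2. Qed.

Lemma mem_restr_ran g a b x y : piso g -> (a, a) \in g -> (b, b) \in g ->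
  (x, y) \in restr lt g a b -> [/\ (x, y) \in g, leM a y & leM y b].
Proof.
move=> pg ag bg; rewrite mem_restr => /and3P [h ax xb].
have [<- _] := partial_iso_fix_leM pg ag h; have [_ <-] := partial_iso_fix_leM pg bg h.
by split.
Qed.

Lemma restrI g a b x y : piso g -> (a, a) \in g -> (b, b) \in g ->
  (x, y) \in g -> leM a y -> leM y b -> (x, y) \in restr lt g a b.
Proof.
move=> pg ag bg h ay yb; rewrite mem_restr h.
have [-> _] := partial_iso_fix_leM pg ag h.
by have [_ ->] := partial_iso_fix_leM pg bg h; rewrite ay.
Qed.

Lemma is_dmin_restr g a b : (a, a) \in g -> leM a b -> is_dmin lt (restr lt g a b) a.
Proof.
move=> ag ab; apply/andP; split; first by apply: (mem_dom (y := a)); rewrite mem_restr ag leMxx.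
by apply/allP => x /dom_restr /andP [ax _]; rewrite eq_sym -leM_eqVlt.
Qed.

Lemma is_dmax_restr g a b : (b, b) \in g -> leM a b -> is_dmax lt (restr lt g a b) b.
Proof.
move=> bg ab; apply/andP; split; first by apply: (mem_dom (y := b)); rewrite mem_restr bg ab leMxx.
by apply/allP => x /dom_restr /andP [_ xb]; rewrite -leM_eqVlt.
Qed.

Lemma is_dmax_restr_eq g a b j : (b, b) \in g -> leM a b -> is_dmax lt (restr lt g a b) j -> j = b.
Proof.
move=> bg ab /andP [/dom_restr /andP [_ jb] /allP /(_ b)].
rewrite (mem_dom (y := b)) ?mem_restr ?bg ?ab ?leMxx // => /(_ isT) /orP [/eqP //|bj].
by move: jb; rewrite /leM bj.
Qed.

Lemma ess_restr g G a b x : piso G -> pext G g -> (a, a) \in g -> (b, b) \in g ->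
  leM a b -> ess lt (restr lt g a b) x -> [/\ lt a x, lt x b & x \in pts g].
Proof.
move=> pG gG ag bg ab /andP [/andP [hx xmin] xmax].
have [ax xb] : leM a x /\ leM x b.
  case/orP: hx => [/dom_restr /andP [] //|/ranP [z /(pext_restr gG)]].
  by case/(mem_restr_ran pG (gG _ ag) (gG _ bg)) => _ -> ->.
split.
- rewrite ltM_leM_neq //; apply: contraNneq xmin => <-; exact: is_dmin_restr.
- rewrite ltM_leM_neq //; apply: contraNneq xmax => ->; exact: is_dmax_restr.
- case/orP: hx => [/domP [y]|/ranP [y]] /restr_sub; [exact: mem_pts_dom|exact: mem_pts_ran].
Qed.

Lemma essI g a b x : piso g -> (a, a) \in g -> (b, b) \in g ->
  x \in pts g -> lt a x -> lt x b -> ess lt (restr lt g a b) x.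
Proof.
move=> pg ag bg hx ax xb; have ab := ltMW (ltM_trans ax xb).
rewrite /ess -andbA; apply/and3P; split.
- move: hx; rewrite mem_cat => /orP [/domP [y h]|/ranP [y h]].
    by rewrite (mem_dom (y := y)) // mem_restr h (ltMW ax) (ltMW xb).
  by apply/orP; right; apply: (mem_ran (x := y)); apply: restrI => //; apply: ltMW.
- apply/negP => /andP [_ /allP /(_ a)]; rewrite (mem_dom (y := a)) ?mem_restr ?ag ?ab ?leMxx //.
  by move/(_ isT); rewrite eq_sym -leM_eqVlt /leM ax.
- apply/negP => /andP [_ /allP /(_ b)]; rewrite (mem_dom (y := b)) ?mem_restr ?bg ?ab ?leMxx //.
  by move/(_ isT); rewrite -leM_eqVlt /leM xb.
Qed.

Lemma restr_cat_out g n a b : (forall pr, pr \in n -> ~~ (leM a pr.1 && leM pr.1 b)) ->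
  restr lt (g ++ n) a b = restr lt g a b.
Proof.
move=> out; rewrite /restr filter_cat -[RHS]cats0; congr (_ ++ _).
apply/eqP; rewrite -[_ == _]negbK -has_filter; apply/hasPn => pr /out.
by rewrite /= !leM_eqVlt.
Qed.

Lemma is_dmin_cat g n m : is_dmin lt g m -> (forall pr, pr \in n -> lt m pr.1) ->
  is_dmin lt (g ++ n) m.
Proof.
move=> /andP [mg /allP H] Hn; apply/andP; split; first by rewrite /dom map_cat mem_cat mg.
apply/allP => x; rewrite /dom map_cat mem_cat => /orP [/H //|/mapP [pr /Hn h ->]].
by rewrite h orbT.
Qed.

Lemma is_dmax_cat g n m : is_dmax lt g m -> (forall pr, pr \in n -> lt pr.1 m) ->
  is_dmax lt (g ++ n) m.
Proof.
move=> /andP [mg /allP H] Hn; apply/andP; split; first by rewrite /dom map_cat mem_cat mg.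
apply/allP => x; rewrite /dom map_cat mem_cat => /orP [/H //|/mapP [pr /Hn h ->]].
by rewrite h orbT.
Qed.

Definition inside a b (n : pgraph M) :=
  all (fun pr => [&& lt a pr.1, lt pr.1 b, lt a pr.2 & lt pr.2 b]) n.

Lemma inside_cat2 a b n1 n2 n1' n2' : inside a b (n1 ++ n2) -> inside a b (n1' ++ n2') ->
  inside a b ((n1 ++ n1') ++ (n2 ++ n2')).
Proof. by rewrite /inside !all_cat => /andP [-> ->] /andP [-> ->]. Qed.

Section Letters.
Implicit Types (P Q : pgraph M) (l : letter).

Definition letter_gen P Q l := if l.1 then Q else P.
Definition letter_cogen P Q l := if l.1 then P else Q.
Definition letter_map P Q l := if l.2 then pinv (letter_gen P Q l) else letter_gen P Q l.

Lemma partial_iso_letter_gen P Q l : piso P -> piso Q -> piso (letter_gen P Q l).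
Proof. by rewrite /letter_gen; case: l.1. Qed.

Lemma partial_iso_letter_cogen P Q l : piso P -> piso Q -> piso (letter_cogen P Q l).
Proof. by rewrite /letter_cogen; case: l.1. Qed.

Lemma partial_iso_letter_map P Q l : piso P -> piso Q -> piso (letter_map P Q l).
Proof.
move=> pP pQ; have := partial_iso_letter_gen l pP pQ.
by rewrite /letter_map; case: l.2 => //; apply: partial_iso_pinv.
Qed.

Lemma act_letterP P Q l c e : piso P -> piso Q ->
  act_letter P Q l c = Some e <-> (c, e) \in letter_map P Q l.
Proof.
move=> pP pQ; split; first exact: papp_mem.
exact/partial_iso_papp/partial_iso_letter_map.
Qed.

Lemma letter_map_sub P Q P' Q' l : pext P' P -> pext Q' Q ->
  pext (letter_map P' Q' l) (letter_map P Q l).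
Proof.
rewrite /letter_map /letter_gen => PP' QQ'; case: l.1; case: l.2 => // -[x y];
  rewrite !mem_pinv; auto.
Qed.

Lemma fix_letter_gen P Q l x : (x, x) \in P -> (x, x) \in Q -> (x, x) \in letter_gen P Q l.
Proof. by rewrite /letter_gen; case: l.1. Qed.

Lemma fix_letter_map P Q l x : (x, x) \in P -> (x, x) \in Q -> (x, x) \in letter_map P Q l.
Proof. by move=> xP xQ; rewrite /letter_map; case: l.2; rewrite ?mem_pinv fix_letter_gen. Qed.

Lemma pts_letter_map P Q l x : (x \in pts (letter_map P Q l)) = (x \in pts (letter_gen P Q l)).
Proof. by rewrite /letter_map; case: l.2; rewrite ?pts_pinv. Qed.

Lemma letter_gen_cogen P Q l l' : l.1 != l'.1 ->
  letter_gen P Q l = letter_cogen P Q l' /\ letter_cogen P Q l = letter_gen P Q l'.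
Proof. by rewrite /letter_gen /letter_cogen; case: l.1; case: l'.1. Qed.

Lemma letter_map_restr P Q l a b x y : piso P -> piso Q ->
  (a, a) \in P -> (b, b) \in P -> (a, a) \in Q -> (b, b) \in Q ->
  (x, y) \in letter_map P Q l -> leM a x -> leM x b ->
  [/\ (x, y) \in letter_map (restr lt P a b) (restr lt Q a b) l, leM a y & leM y b].
Proof.
move=> pP pQ aP bP aQ bQ; have pg := partial_iso_letter_gen l pP pQ.
have ag := fix_letter_gen l aP aQ; have bg := fix_letter_gen l bP bQ.
have eg : letter_gen (restr lt P a b) (restr lt Q a b) l = restr lt (letter_gen P Q l) a b.
  by rewrite /letter_gen; case: l.1.
rewrite /letter_map eg; case: l.2; rewrite ?mem_pinv => h ax xb.
  have [-> _] := partial_iso_fix_leM pg ag h; have [_ ->] := partial_iso_fix_leM pg bg h.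
  by rewrite restrI.
have [<- _] := partial_iso_fix_leM pg ag h; have [_ <-] := partial_iso_fix_leM pg bg h.
by rewrite mem_restr h ax xb.
Qed.

(* [ext_p l x y ++ ext_q l x y] is the pair to add to [P] or [Q] for [l] to map [x] to [y]. *)
Definition oriented l (x y : M) : M * M := if l.2 then (y, x) else (x, y).
Definition ext_p l (x y : M) : pgraph M := if l.1 then [::] else [:: oriented l x y].
Definition ext_q l (x y : M) : pgraph M := if l.1 then [:: oriented l x y] else [::].

Lemma letter_map_ext P Q l x y :
  letter_map (P ++ ext_p l x y) (Q ++ ext_q l x y) l = letter_map P Q l ++ [:: (x, y)].
Proof. by case: l => -[] []; rewrite /letter_map /letter_gen /= ?cats0 ?pinv_cat. Qed.

Lemma letter_gen_ext P Q l x y :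
  letter_gen (P ++ ext_p l x y) (Q ++ ext_q l x y) l = letter_gen P Q l ++ [:: oriented l x y].
Proof. by case: l => -[] []. Qed.

Lemma letter_cogen_ext P Q l x y :
  letter_cogen (P ++ ext_p l x y) (Q ++ ext_q l x y) l = letter_cogen P Q l.
Proof. by case: l => -[] []; rewrite /letter_cogen /= cats0. Qed.

Lemma partial_iso_ext P Q l x y :
  piso (letter_map P Q l ++ [:: (x, y)]) -> piso (letter_cogen P Q l) ->
  piso (P ++ ext_p l x y) /\ piso (Q ++ ext_q l x y).
Proof.
rewrite -letter_map_ext -(letter_cogen_ext P Q l x y).
move: (P ++ _) (Q ++ _) => P' Q'; rewrite /letter_map /letter_gen /letter_cogen.
by case: l.1; case: l.2 => // /partial_iso_pinv; rewrite pinvK.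
Qed.

Lemma inside_ext l a b x y : lt a x -> lt x b -> lt a y -> lt y b ->
  inside a b (ext_p l x y ++ ext_q l x y).
Proof.
move=> ax xb ay yb; apply/allP => pr; rewrite /ext_p /ext_q /oriented.
by case: l.1; rewrite /= ?cats0 inE => /eqP ->; case: l.2; apply/and4P.
Qed.

End Letters.

Section WordEvaluation.
Implicit Types (P Q : pgraph M) (W : word).

Lemma weval_cons W l P Q c :
  weval (l :: W) P Q c = obind (act_letter P Q l) (weval W P Q c).
Proof. by []. Qed.

Lemma weval_sub W P Q P' Q' c e :
  piso P -> piso Q -> piso P' -> piso Q' -> pext P' P -> pext Q' Q ->
  weval W P Q c = Some e -> weval W P' Q' c = Some e.
Proof.
move=> pP pQ pP' pQ' PP' QQ'; elim: W e => [|l W IH] e //=.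
case h: (weval W P Q c) => [e'|] //= /(act_letterP _ _ _ pP pQ) he; rewrite (IH _ h) /=.
by apply/(act_letterP _ _ _ pP' pQ'); apply: (letter_map_sub PP' QQ' he).
Qed.

Lemma weval_restr_sub W P Q a b c e : piso P -> piso Q ->
  weval W (restr lt P a b) (restr lt Q a b) c = Some e -> weval W P Q c = Some e.
Proof.
move=> pP pQ; apply: weval_sub => //; do ?[exact: partial_iso_restr|exact: restr_sub].
Qed.

Lemma weval_lt W P Q c c' e e' : piso P -> piso Q ->
  weval W P Q c = Some e -> weval W P Q c' = Some e' -> lt c c' -> lt e e'.
Proof.
move=> pP pQ; elim: W e e' => [|l W IH] e e' /=; first by move=> [<-] [<-].
case h: (weval W P Q c) => [x|] //=; case h': (weval W P Q c') => [x'|] //=.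
move=> /(act_letterP _ _ _ pP pQ) he /(act_letterP _ _ _ pP pQ) he' cc'.
by rewrite -(partial_iso_lt (partial_iso_letter_map l pP pQ) he he'); apply: IH h h' cc'.
Qed.

Lemma weval_restr W P Q a b c e : piso P -> piso Q ->
  (a, a) \in P -> (b, b) \in P -> (a, a) \in Q -> (b, b) \in Q -> leM a c -> leM c b ->
  weval W P Q c = Some e -> weval W (restr lt P a b) (restr lt Q a b) c = Some e.
Proof.
move=> pP pQ aP bP aQ bQ ac cb.
suff: weval W P Q c = Some e -> [/\ weval W (restr lt P a b) (restr lt Q a b) c = Some e,
  leM a e & leM e b] by move=> H /H [].
elim: W e => [|l W IH] e /=; first by move=> [<-].
case h: (weval W P Q c) => [x|] //= /(act_letterP _ _ _ pP pQ) hx.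
have [-> ax xb] := IH _ h; have [hx' ae eb] := letter_map_restr pP pQ aP bP aQ bQ hx ax xb.
by split => //; apply/act_letterP => //; apply: partial_iso_restr.
Qed.

End WordEvaluation.

(** * Monotone chains *)

Section MonotoneChains.
Implicit Types (R : rel M).

Definition gtM : rel M := fun x y => lt y x.

(* [moves_on lt] / [moves_on gtM]: the interval (j, b) is increasing / decreasing for [g]. *)
Definition moves_on R g j b := all (fun pr => lt j pr.1 ==> lt pr.1 b ==> R pr.1 pr.2) g.

Lemma moves_onP R g j b :
  reflect (forall z w, (z, w) \in g -> lt j z -> lt z b -> R z w) (moves_on R g j b).
Proof.
apply: (iffP allP) => [H z w /H /implyP jz /jz /implyP //|H [z w] /H Hzw].
by apply/implyP => /Hzw /implyP.
Qed.

Lemma moves_on_narrow R g j b c c' : moves_on R g j b -> leM j c -> leM c' b ->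
  moves_on R g c c'.
Proof.
move=> /moves_onP H jc c'b; apply/moves_onP => z w h cz zc'.
by apply: H h (leM_ltM_trans jc cz) (ltM_leM_trans zc' c'b).
Qed.

Lemma moves_on_rcons R g pr c c' : ~~ (lt c pr.1 && lt pr.1 c') ->
  moves_on R (g ++ [:: pr]) c c' = moves_on R g c c'.
Proof.
move=> /nandP out; rewrite /moves_on all_cat /= andbT.
by case: out => /negbTE ->; rewrite /= ?implybT andbT.
Qed.

Lemma moves_on_pinv R g j b : piso g -> (j, j) \in g -> (b, b) \in g ->
  moves_on R (pinv g) j b = moves_on (fun z w => R w z) g j b.
Proof.
move=> pg jg bg; apply/moves_onP/moves_onP => H z w.
  move=> h; have [-> _] := partial_iso_fix_lt pg jg h; have [_ ->] := partial_iso_fix_lt pg bg h.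
  by apply: H; rewrite mem_pinv.
rewrite mem_pinv => h; have [<- _] := partial_iso_fix_lt pg jg h.
by have [_ <-] := partial_iso_fix_lt pg bg h; apply: H.
Qed.

Lemma moves_on_letter_map P Q l j b : piso (letter_gen P Q l) ->
  (j, j) \in letter_gen P Q l -> (b, b) \in letter_gen P Q l ->
  moves_on lt (letter_map P Q l) j b ->
  moves_on lt (letter_gen P Q l) j b || moves_on gtM (letter_gen P Q l) j b.
Proof.
rewrite /letter_map => pg jg bg; case: l.2 => [|-> //].
by rewrite moves_on_pinv // => ->; rewrite orbT.
Qed.

Definition monotone_piece g c c' :=
  [&& (c, c) \in g, (c', c') \in g & moves_on lt g c c' || moves_on gtM g c c'].

Lemma monotone_piece_rcons g pr c c' : ~~ (lt c pr.1 && lt pr.1 c') ->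
  monotone_piece g c c' -> monotone_piece (g ++ [:: pr]) c c'.
Proof.
by move=> out /and3P [cg c'g m]; rewrite /monotone_piece !mem_cat cg c'g !moves_on_rcons.
Qed.

Lemma moves_on_vacuous R g j b : (forall z w, (z, w) \in g -> lt j z -> leM b z) ->
  moves_on R g j b.
Proof. by move=> H; apply/moves_onP => z w /H h /h; rewrite /leM => /negbTE ->. Qed.

(* The restriction of [g] to [[a, b]] is informative, [j] being one of the chosen fixed points
   (see [informative_restr]). *)
Definition monotone_chain g a b j := exists s,
  [/\ path lt a s, last a s = b, path (monotone_piece g) a s & j \in a :: s].

Lemma path_ltM_head a s x : path lt a s -> x \in s -> lt a x.
Proof. by move=> /(order_path_min (fun y x z => @ltM_trans x y z)) /allP; apply. Qed.

Lemma path_ltM_last a s x : path lt a s -> x \in a :: s -> leM x (last a s).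
Proof.
elim: s a x => [|c s IH] a x /=; first by rewrite inE => _ /eqP ->; apply: leMxx.
move=> /andP [ac cs]; rewrite inE => /orP [/eqP ->|/(IH _ _ cs) //].
exact: leM_trans (ltMW ac) (IH _ _ cs (mem_head _ _)).
Qed.

Lemma chain_bounds a s b x : path lt a s -> last a s = b -> x \in a :: s -> leM a x && leM x b.
Proof.
move=> ls sb xs; rewrite -sb path_ltM_last // andbT.
by move: xs; rewrite inE => /orP [/eqP ->|/(path_ltM_head ls) /ltMW //]; apply: leMxx.
Qed.

Lemma path_monotone_fix g a s x : path (monotone_piece g) a s -> x \in s -> (x, x) \in g.
Proof.
elim: s a => // c s IH a /= /andP [/and3P [_ cg _] cs].
by rewrite inE => /orP [/eqP ->|/(IH _ cs)].
Qed.

Lemma monotone_chain_bounds g a b j : (a, a) \in g -> monotone_chain g a b j ->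
  [/\ (j, j) \in g, (b, b) \in g, leM a j, leM j b & leM a b].
Proof.
move=> ag [s [ls sb ms js]]; have bs : b \in a :: s by rewrite -sb mem_last.
have fixed x : x \in a :: s -> (x, x) \in g.
  by rewrite inE => /orP [/eqP ->|/(path_monotone_fix ms)].
have /andP [aj jb] := chain_bounds ls sb js; have /andP [ab _] := chain_bounds ls sb bs.
by split; rewrite ?fixed.
Qed.

Lemma monotone_chain_start g a b j : monotone_chain g a b j -> monotone_chain g a b a.
Proof. by case=> s [ls sb ms _]; exists s; rewrite mem_head. Qed.

Lemma path_insert (R R' : rel M) a s b f :
  path lt a s -> last a s = b -> f \notin a :: s -> lt a f -> lt f b ->
  (forall c c', R c c' -> ~~ (lt c f && lt f c') -> R' c c') ->
  (forall c c', R c c' -> lt c f -> lt f c' -> leM c' b -> R' c f && R' f c') ->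
  path R a s -> exists s', [/\ path lt a s', last a s' = b, path R' a s' & f \in s'].
Proof.
move=> + + + + + keep split; elim: s a => [|c s IH] a /=.
  by move=> _ -> _ af fa; move: (ltMW af); rewrite /leM fa.
move=> /andP [ac ls] sb; rewrite !inE !negb_or => /and3P [fa fc fs] af fb /andP [Rac Rs].
have [fc'|cf] := orP (ltM_total fc); last first.
  have fcs : f \notin c :: s by rewrite inE negb_or fc.
  have [s' [ls' sb' Rs' fs']] := IH c ls sb fcs cf fb Rs.
  exists (c :: s'); rewrite /= ac ls' sb' Rs' inE fs' orbT keep //.
  by rewrite (negbTE (ltMW cf)) andbF.
have cb : leM c b by rewrite -sb; apply: path_ltM_last ls (mem_head _ _).
have keep_above a' : path lt a' s -> lt f a' -> path R a' s -> path R' a' s.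
  elim: (s) a' => // c' s' IH' a' /= /andP [a'c' ls'] fa' /andP [Ra'c' Rs'].
  by rewrite keep ?(negbTE (ltMW fa')) // IH' // (ltM_trans fa' a'c').
exists [:: f, c & s]; split; rewrite /= ?af ?fc' ?ls ?sb ?mem_head //.
by have /andP [-> ->] := split _ _ Rac af fc' cb; rewrite keep_above.
Qed.

Lemma monotone_chain_through g a b j : (j, j) \in g -> leM a j -> leM j b ->
  monotone_chain g a b a -> monotone_chain g a b j.
Proof.
move=> jg aj jb [s [ls sb ms _]]; case: (boolP (j \in a :: s)) => js; first by exists s.
have aj' : lt a j by rewrite ltM_leM_neq //; apply: contraNneq js => <-; apply: mem_head.
have jb' : lt j b by rewrite ltM_leM_neq //; apply: contraNneq js => ->; rewrite -sb mem_last.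
have split c c' : monotone_piece g c c' -> lt c j -> lt j c' -> leM c' b ->
    monotone_piece g c j && monotone_piece g j c'.
  case/and3P => cg c'g mono cj jc' _; rewrite /monotone_piece cg c'g jg /=.
  by case/orP: mono => m; rewrite (moves_on_narrow m (leMxx c) (ltMW jc'))
    ?(moves_on_narrow m (ltMW cj) (leMxx c')) ?orbT.
have [s' [ls' sb' ms' js']] := path_insert ls sb js aj' jb' (fun c c' m _ => m) split ms.
by exists s'; rewrite inE js' orbT.
Qed.

Lemma path_monotone_rcons g pr a s b j :
  path lt a s -> last a s = b -> j \in a :: s \/ leM j a ->
  moves_on lt (g ++ [:: pr]) j b || moves_on gtM (g ++ [:: pr]) j b ->
  lt j pr.1 -> lt pr.1 b ->
  path (monotone_piece g) a s -> path (monotone_piece (g ++ [:: pr])) a s.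
Proof.
move=> + + + mono jpr prb; elim: s a => // c s IH a /= /andP [ac ls] sb ja /andP [m ms].
apply/andP; split; last first.
  apply: IH => //; case: ja => [|ja]; last by right; apply: leM_trans ja (ltMW ac).
  by rewrite inE => /orP [/eqP ->|]; [right; apply: ltMW|left].
case/and3P: m => ag cg m; rewrite /monotone_piece !mem_cat ag cg /=.
case hit: (lt a pr.1 && lt pr.1 c); last by rewrite !moves_on_rcons ?hit.
have ja' : leM j a.
  case: ja => // /[1!inE] /orP [/eqP ->|js]; first exact: leMxx.
  have cj : leM c j.
    move: js; rewrite inE => /orP [/eqP ->|/(path_ltM_head ls) /ltMW //]; exact: leMxx.
  by move/andP: hit => [_ /(ltM_trans jpr) /(leM_ltM_trans cj)]; rewrite (negbTE (ltMxx _)).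
have cb : leM c b by rewrite -sb; apply: path_ltM_last ls (mem_head _ _).
by case/orP: mono => m'; rewrite (moves_on_narrow m' ja' cb) ?orbT.
Qed.

Lemma monotone_chain_rcons g pr a b j :
  moves_on lt (g ++ [:: pr]) j b || moves_on gtM (g ++ [:: pr]) j b ->
  lt j pr.1 -> lt pr.1 b ->
  monotone_chain g a b j -> monotone_chain (g ++ [:: pr]) a b j.
Proof.
move=> mono jpr prb [s [ls sb ms js]]; exists s; split => //.
exact: path_monotone_rcons ls sb (or_introl js) mono jpr prb ms.
Qed.

(* [p_moves lt] and [p_moves gtM] unfold to [p_increasing] and [p_decreasing]. *)
Definition p_moves R g a b : Prop :=
  a \in dom g /\ b \in dom g /\ fixb g a /\ fixb g b /\
  forall c, c \in dom g -> lt a c -> lt c b -> exists2 e, papp g c = Some e & R c e.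

Lemma fixb_mem g x : fixb g x -> (x, x) \in g.
Proof. by move/eqP/papp_mem. Qed.

Lemma p_moves_restr R g a b c c' : piso g -> p_moves R (restr lt g a b) c c' ->
  [/\ (c, c) \in g, (c', c') \in g, leM a c, leM c' b & moves_on R g c c'].
Proof.
move=> pg [cd [c'd [/fixb_mem /restr_sub cg [/fixb_mem /restr_sub c'g H]]]].
have /andP [ac _] := dom_restr cd; have /andP [_ c'b] := dom_restr c'd.
split => //; apply/moves_onP => z w h cz zc'.
have zr : (z, w) \in restr lt g a b.
  by rewrite mem_restr h (ltMW (leM_ltM_trans ac cz)) (ltMW (ltM_leM_trans zc' c'b)).
have [e] := H z (mem_dom zr) cz zc'.
by rewrite (partial_iso_papp (partial_iso_restr a b pg) zr) => -[<-].
Qed.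

Lemma moves_on_restr R g a b c c' : piso g -> (c, c) \in g -> (c', c') \in g ->
  leM a c -> leM c c' -> leM c' b -> moves_on R g c c' -> p_moves R (restr lt g a b) c c'.
Proof.
move=> pg cg c'g ac cc' c'b /moves_onP H; have pr := partial_iso_restr a b pg.
have cr : (c, c) \in restr lt g a b by rewrite mem_restr cg ac (leM_trans cc' c'b).
have c'r : (c', c') \in restr lt g a b by rewrite mem_restr c'g c'b (leM_trans ac cc').
do 4 (split; first by rewrite ?(mem_dom cr) ?(mem_dom c'r) /fixb ?(partial_iso_papp pr cr)
  ?(partial_iso_papp pr c'r)).
move=> z /domP [w zw] cz zc'; exists w; first exact: partial_iso_papp pr zw.
by apply: H cz zc'; apply: restr_sub zw.
Qed.

Lemma p_monotone_restr g a b c c' : piso g -> leM a c -> leM c c' -> leM c' b ->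
  p_monotone lt (restr lt g a b) c c' <-> monotone_piece g c c'.
Proof.
move=> pg ac cc' c'b; split.
  by case=> [/(p_moves_restr pg)|/(p_moves_restr pg)] [cg c'g _ _ m];
    rewrite /monotone_piece cg c'g m ?orbT.
case/and3P=> cg c'g /orP [m|m]; [left|right]; exact: moves_on_restr m.
Qed.

Lemma informative_restr g a b : piso g -> (a, a) \in g -> monotone_chain g a b a ->
  informative lt (restr lt g a b).
Proof.
move=> pg ag ch; have [_ bg _ _ ab] := monotone_chain_bounds ag ch.
case: ch => s [ls sb ms _]; have pr := partial_iso_restr a b pg.
have fixed x : x \in a :: s -> (x, x) \in restr lt g a b.
  move=> xs; have /andP [ax xb] := chain_bounds ls sb xs; rewrite mem_restr ax xb !andbT.
  by move: xs; rewrite inE => /orP [/eqP ->|/(path_monotone_fix ms)].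
have fixr x : x \in a :: s -> fixb (restr lt g a b) x.
  by move=> /fixed xr; rewrite /fixb (partial_iso_papp pr xr).
exists a, s; split; first exact: is_dmin_restr.
split; first by rewrite sb; apply: is_dmax_restr.
split; first by apply: fixr; rewrite mem_head.
split.
  by apply/allP => x xs; rewrite (mem_dom (fixed _ _)) ?fixr // inE xs orbT.
split => // i lti; have /(pathP a) /(_ i lti) lt_i := ls.
have mem_i k : (k <= size s)%N -> nth a (a :: s) k \in a :: s by move=> ?; apply: mem_nth.
have := mem_i i (ltnW lti); have := mem_i i.+1 lti => /= /(chain_bounds ls sb) /andP [_ hb].
move=> /(chain_bounds ls sb) /andP [ha _].
by apply/(p_monotone_restr pg ha (ltMW lt_i) hb); move/(pathP a): ms; apply.
Qed.

Lemma monotone_chain_of_informative g a b : piso g -> (a, a) \in g -> (b, b) \in g ->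
  lt a b -> informative lt (restr lt g a b) -> monotone_chain g a b a.
Proof.
move=> pg ag bg ab [a0 [s [a0min [smax [_ [_ [ls mon]]]]]]].
have a0a : a0 = a.
  move/andP: a0min => [/dom_restr /andP [aa0 _] /allP /(_ a)].
  rewrite (mem_dom (y := a)) ?mem_restr ?ag ?leMxx ?(ltMW ab) // eq_sym -leM_eqVlt.
  by move/(_ isT) => a0a; apply: leM_anti a0a aa0.
subst a0; have sb : last a s = b.
  by apply: is_dmax_restr_eq smax => //; apply: ltMW.
exists s; split; rewrite ?mem_head //; apply/(pathP a) => i lti.
have [ha hb] : leM a (nth a (a :: s) i) /\ leM (nth a s i) b.
  by case: (mon i lti) => /(p_moves_restr pg) [].
by apply/(p_monotone_restr pg ha (ltMW ((pathP a ls) i lti)) hb); apply: mon.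
Qed.

Lemma monotone_chain_add_fix g a b f : (a, a) \in g -> lt a f -> lt f b -> f \notin pts g ->
  (forall z, z \in pts g -> lt f z -> leM b z) ->
  monotone_chain g a b a -> monotone_chain (g ++ [:: (f, f)]) a b f.
Proof.
move=> ag af fb fg above [s [ls sb ms _]].
have fs : f \notin a :: s.
  apply: contra fg; rewrite inE => /orP [/eqP ->|/(path_monotone_fix ms) /mem_pts_dom //].
  exact: mem_pts_dom ag.
have ff : (f, f) \in g ++ [:: (f, f)] by rewrite mem_cat mem_head orbT.
have keep c c' : monotone_piece g c c' -> ~~ (lt c f && lt f c') ->
    monotone_piece (g ++ [:: (f, f)]) c c'.
  by move=> m out; apply: monotone_piece_rcons.
have split c c' : monotone_piece g c c' -> lt c f -> lt f c' -> leM c' b ->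
    monotone_piece (g ++ [:: (f, f)]) c f && monotone_piece (g ++ [:: (f, f)]) f c'.
  case/and3P => cg c'g m cf fc' c'b; rewrite /monotone_piece ff !mem_cat cg c'g /=.
  have vac : moves_on lt (g ++ [:: (f, f)]) f c'.
    apply: moves_on_vacuous => z w; rewrite mem_cat inE => /orP [/mem_pts_dom zg fz|/eqP [-> _]].
      exact: leM_trans c'b (above _ zg fz).
    by rewrite (negbTE (ltMxx _)).
  rewrite vac andbT !moves_on_rcons /= ?(negbTE (ltMxx _)) ?andbF //.
  by case/orP: m => m; rewrite (moves_on_narrow m (leMxx c) (ltMW fc')) ?orbT.
have [s' [ls' sb' ms' fs']] := path_insert ls sb fs af fb keep split ms.
by exists s'; rewrite inE fs' orbT.
Qed.

End MonotoneChains.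

(** * Prepending a word inside one gap *)

Section OneInterval.
Implicit Types (P Q : pgraph M) (l : letter) (W : word).
Local Notation increasing_on := (moves_on lt).

Definition fixes_ends P Q a b :=
  [/\ (a, a) \in P, (b, b) \in P, (a, a) \in Q, (b, b) \in Q & lt a b].

Lemma fixes_ends_cat P Q nP nQ a b : fixes_ends P Q a b -> fixes_ends (P ++ nP) (Q ++ nQ) a b.
Proof. by case=> aP bP aQ bQ ab; split; rewrite // mem_cat ?aP ?bP ?aQ ?bQ. Qed.

(* [e] is already mapped by [G] above [Os], or can be by [extend_above]. *)
Definition liftable G (Os : seq M) e :=
  (exists2 y, (e, y) \in G & forall s, s \in Os -> lt s y) \/
  (e \notin dom G /\ forall z w, (z, w) \in G -> lt e z -> lt e w /\ forall s, s \in Os -> lt s w).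

Lemma liftable_rcons G Os e e' y : liftable G Os e' -> lt e y -> (forall s, s \in Os -> lt s y) ->
  liftable (G ++ [:: (e, y)]) Os e'.
Proof.
move=> [[y' h1 h2]|[e'G H]] ey Osy; first by left; exists y'; rewrite // mem_cat h1.
have [->|e'e] := eqVneq e' e; first by left; exists y; rewrite // mem_cat mem_head orbT.
right; split; first by rewrite /dom map_cat mem_cat negb_or e'G inE.
move=> z w; rewrite mem_cat inE => /orP [/H //|/eqP [-> ->] e'e''].
by split => //; apply: ltM_trans ey.
Qed.

Lemma liftable_increasing G j b e Os : piso G -> (b, b) \in G -> increasing_on G j b ->
  lt j e -> lt e b -> (forall s, s \in Os -> lt s e) -> liftable G Os e.
Proof.
move=> pG bG /moves_onP inc je eb Ose.
case: (boolP (e \in dom G)) => [/domP [y ey]|eG].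
  by left; exists y => // s /Ose se; apply: ltM_trans se (inc _ _ ey je eb).
right; split => // z w zw ez; suff ew : lt e w by split => // s /Ose /ltM_trans; apply.
case: (boolP (lt z b)) => zb; first exact: ltM_trans ez (inc _ _ zw (ltM_trans je ez) zb).
by have [bz _] := partial_iso_fix_leM pG bG zw; apply: ltM_leM_trans eb _; rewrite -bz.
Qed.

Lemma lift_image l a b j (Os : seq M) e P Q :
  piso P -> piso Q -> fixes_ends P Q a b ->
  monotone_chain (letter_gen P Q l) a b j -> increasing_on (letter_map P Q l) j b ->
  lt j e -> lt e b -> e \notin dom (letter_map P Q l) ->
  (forall z w, (z, w) \in letter_map P Q l -> lt e z -> lt e w /\ forall s, s \in Os -> lt s w) ->
  exists y, let P1 := P ++ ext_p l e y in let Q1 := Q ++ ext_q l e y in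
    [/\ lt e y, forall s, s \in Os -> lt s y, inside a b (ext_p l e y ++ ext_q l e y),
       piso P1 /\ piso Q1 &
       monotone_chain (letter_gen P1 Q1 l) a b j /\ increasing_on (letter_map P1 Q1 l) j b].
Proof.
move=> pP pQ [aP bP aQ bQ ab] ch inc je eb eG above.
set G := letter_map P Q l; have pG : piso G by apply: partial_iso_letter_map.
have [y [pGy Osy yb]] : exists y, [/\ piso (G ++ [:: (e, y)]), forall s, s \in e :: Os -> lt s y
    & lt y b].
  apply: extend_above (mem_head _ _) _ => //; first exact: fix_letter_map.
  by move=> z w /above H /H [ew Osw] s; rewrite inE => /orP [/eqP -> //|/Osw].
have ey : lt e y by apply: Osy; rewrite mem_head.
exists y => P1 Q1; have map1 : letter_map P1 Q1 l = G ++ [:: (e, y)] by apply: letter_map_ext.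
have ag := fix_letter_gen l aP aQ; have [jg bg aj _ _] := monotone_chain_bounds ag ch.
have inc1 : increasing_on (letter_map P1 Q1 l) j b.
  by rewrite map1 /moves_on all_cat; apply/andP; split; last by rewrite /= ey !implybT.
have [pP1 pQ1] : piso P1 /\ piso Q1.
  by apply: partial_iso_ext => //; apply: partial_iso_letter_cogen.
split => //.
- by move=> s sOs; apply: Osy; rewrite inE sOs orbT.
- apply: inside_ext => //; first exact: leM_ltM_trans aj je.
  exact: leM_ltM_trans aj (ltM_trans je ey).
split => //; rewrite /P1 /Q1 letter_gen_ext.
have e_ins : lt j (oriented l e y).1 /\ lt (oriented l e y).1 b.
  by rewrite /oriented; case: l.2; split => //; apply: ltM_trans je ey.
apply: monotone_chain_rcons e_ins.1 e_ins.2 ch.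
rewrite -letter_gen_ext; apply: moves_on_letter_map inc1; first exact: partial_iso_letter_gen.
  by rewrite letter_gen_ext mem_cat jg.
by rewrite letter_gen_ext mem_cat bg.
Qed.

Lemma push_above l a b j (Os es : seq M) P Q :
  piso P -> piso Q -> fixes_ends P Q a b ->
  monotone_chain (letter_gen P Q l) a b j -> increasing_on (letter_map P Q l) j b ->
  (forall e, e \in es -> [/\ lt j e, lt e b & liftable (letter_map P Q l) Os e]) ->
  exists nP nQ, [/\ inside a b (nP ++ nQ), piso (P ++ nP), piso (Q ++ nQ),
    letter_cogen (P ++ nP) (Q ++ nQ) l = letter_cogen P Q l &
    [/\ monotone_chain (letter_gen (P ++ nP) (Q ++ nQ) l) a b j,
       increasing_on (letter_map (P ++ nP) (Q ++ nQ) l) j b &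
       forall e, e \in es ->
         exists2 y, (e, y) \in letter_map (P ++ nP) (Q ++ nQ) l & forall s, s \in Os -> lt s y]].
Proof.
elim: es P Q => [|e es IH] P Q pP pQ ends ch inc Hes.
  by exists [::], [::]; rewrite !cats0.
have [je eb liftable_e] := Hes e (mem_head _ _).
have {}Hes e' : e' \in es -> [/\ lt j e', lt e' b & liftable (letter_map P Q l) Os e'].
  by move=> e'es; apply: Hes; rewrite inE e'es orbT.
have map_sub P' Q' n n' : pext (letter_map (P' ++ n) (Q' ++ n') l) (letter_map P' Q' l).
  by apply: letter_map_sub; apply: pext_cat.
case: liftable_e => [[y ey Osy]|[eG above]].
  have [nP [nQ [ins pP' pQ' co [ch' inc' H]]]] := IH P Q pP pQ ends ch inc Hes.
  exists nP, nQ; split => //; split => // e'; rewrite inE => /orP [/eqP ->|/H //].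
  by exists y => //; apply: map_sub.
have [y [ey Osy ins_e [pP1 pQ1] [ch1 inc1]]] := lift_image pP pQ ends ch inc je eb eG above.
set P1 := P ++ ext_p l e y in pP1 ch1 inc1; set Q1 := Q ++ ext_q l e y in pQ1 ch1 inc1.
have map1 : letter_map P1 Q1 l = letter_map P Q l ++ [:: (e, y)] by apply: letter_map_ext.
have Hes1 e' : e' \in es -> [/\ lt j e', lt e' b & liftable (letter_map P1 Q1 l) Os e'].
  by move=> /Hes [je' e'b lift]; split => //; rewrite map1; apply: liftable_rcons.
have [nP [nQ [ins pP' pQ' co [ch' inc' H]]]] :=
  IH P1 Q1 pP1 pQ1 (fixes_ends_cat _ _ ends) ch1 inc1 Hes1.
have ins' := inside_cat2 ins_e ins.
exists (ext_p l e y ++ nP), (ext_q l e y ++ nQ); move: ins'; rewrite !catA -/P1 -/Q1 => ins'.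
split => //; first by rewrite co letter_cogen_ext.
split => // e'; rewrite inE => /orP [/eqP ->|/H //]; exists y => //.
by apply: map_sub; rewrite map1 mem_cat mem_head orbT.
Qed.

Lemma fixed_point_above g a b (es : seq M) : piso g -> (a, a) \in g -> (b, b) \in g -> lt a b ->
  (forall e, e \in es -> [/\ lt a e, lt e b &
     forall x, x \in pts g -> lt a x -> lt x b -> lt x e]) ->
  exists f, [/\ f \notin pts g, piso (g ++ [:: (f, f)]), lt a f /\ lt f b,
    forall e, e \in es -> lt f e & forall z, z \in pts g -> lt f z -> leM b z].
Proof.
move=> pg ag bg ab Hes; set S := a :: [seq z <- pts g | lt z b]; pose L z := has (leM z) S.
have Sb s : s \in S -> lt s b by rewrite inE mem_filter => /orP [/eqP ->|/andP []].
have HL a1 a2 : L a1 -> lt a2 a1 -> L a2.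
  by move=> /hasP [s sS a1s] a21; apply/hasP; exists s => //; apply: leM_trans (ltMW a21) a1s.
have L_pts z : z \in pts g -> L z = lt z b.
  move=> zg; apply/hasP/idP => [[s /Sb sb zs]|zb]; first exact: leM_ltM_trans zs sb.
  by exists z; rewrite ?leMxx // inE mem_filter zb zg orbT.
have Lg z w : (z, w) \in g -> L z = L w.
  move=> zw; rewrite !L_pts ?(mem_pts_dom zw) ?(mem_pts_ran zw) //.
  by have [_ ->] := partial_iso_fix_lt pg bg zw.
have LT t : t \in b :: es -> ~~ L t.
  move=> tT; apply/hasPn => s sS; rewrite /leM negbK.
  move: tT; rewrite inE => /orP [/eqP ->|/Hes [ae eb above]]; first exact: Sb.
  move: sS; rewrite inE mem_filter => /orP [/eqP ->//|/andP [sb sg]].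
  by case: (boolP (lt a s)) => [as_|sa]; [apply: above|apply: leM_ltM_trans sa ae].
have [f [fg pgf fL fT]] := fixed_point_in_cut pg HL Lg LT.
exists f; split => //.
- split; last by apply: fT; rewrite mem_head.
  by rewrite fL ?(mem_pts_dom ag) //; apply/hasP; exists a; rewrite ?mem_head ?leMxx.
- by move=> e ees; apply: fT; rewrite inE ees orbT.
- move=> z zg fz; rewrite /leM -L_pts // -fL //.
  by apply: contraTN fz => /ltMW.
Qed.

Lemma insert_fixed_point l a b (es : seq M) P Q :
  piso P -> piso Q -> fixes_ends P Q a b -> monotone_chain (letter_gen P Q l) a b a ->
  (forall e, e \in es -> [/\ lt a e, lt e b &
     forall x, x \in pts (letter_gen P Q l) -> lt a x -> lt x b -> lt x e]) ->
  exists f, let P1 := P ++ ext_p l f f in let Q1 := Q ++ ext_q l f f in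
    [/\ piso P1 /\ piso Q1, lt a f /\ lt f b, forall e, e \in es -> lt f e,
       monotone_chain (letter_gen P1 Q1 l) a b f &
       forall z w, (z, w) \in letter_map P1 Q1 l -> lt f z -> leM b z].
Proof.
move=> pP pQ [aP bP aQ bQ ab] ch Hes; set G := letter_map P Q l.
have pG : piso G by apply: partial_iso_letter_map.
have [f [fG pGf [af fb] fe above]] : exists f, [/\ f \notin pts G, piso (G ++ [:: (f, f)]),
    lt a f /\ lt f b, forall e, e \in es -> lt f e &
    forall z, z \in pts G -> lt f z -> leM b z].
  apply: fixed_point_above => //; try exact: fix_letter_map.
  by move=> e /Hes [ae eb above]; split => // x; rewrite pts_letter_map; apply: above.
exists f => P1 Q1; split => //.
- by apply: partial_iso_ext => //; apply: partial_iso_letter_cogen.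
- rewrite /P1 /Q1 letter_gen_ext.
  have -> : oriented l f f = (f, f) by rewrite /oriented; case: l.2.
  apply: monotone_chain_add_fix => //; rewrite -?pts_letter_map //; first exact: fix_letter_gen.
  by move=> z; rewrite -pts_letter_map; apply: above.
- move=> z w; rewrite letter_map_ext mem_cat inE => /orP [zw|/eqP [-> _]].
    by apply: above; apply: mem_pts_dom zw.
  by rewrite (negbTE (ltMxx _)).
Qed.

Definition cogen_inside P Q l a b := [seq x <- pts (letter_cogen P Q l) | lt a x && lt x b].

Definition above_cogen P Q l a b e :=
  forall x, x \in pts (letter_cogen P Q l) -> lt a x -> lt x b -> lt x e.

Definition liberation_invariant a b (C : pred M) W P Q :=
  [/\ piso P, piso Q & fixes_ends P Q a b] /\
  if W is l :: _ then exists j,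
    [/\ monotone_chain (letter_gen P Q l) a b j, monotone_chain (letter_cogen P Q l) a b a,
        increasing_on (letter_map P Q l) j b &
        forall c, C c -> exists e,
          [/\ weval W P Q c = Some e, lt j e, lt e b & above_cogen P Q l a b e]]
  else False.

Lemma invariant_push l a b j (C : pred M) W (es : seq M) P Q :
  piso P -> piso Q -> fixes_ends P Q a b ->
  monotone_chain (letter_gen P Q l) a b j -> monotone_chain (letter_cogen P Q l) a b a ->
  increasing_on (letter_map P Q l) j b ->
  (forall c, C c -> exists2 e, e \in es & weval W P Q c = Some e) ->
  (forall e, e \in es ->
     [/\ lt j e, lt e b & liftable (letter_map P Q l) (cogen_inside P Q l a b) e]) ->
  exists nP nQ, inside a b (nP ++ nQ) /\
    liberation_invariant a b C (l :: W) (P ++ nP) (Q ++ nQ).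
Proof.
move=> pP pQ ends ch co_ch inc imgs Hes.
have [nP [nQ [ins pP' pQ' co [ch' inc' H]]]] := push_above pP pQ ends ch inc Hes.
exists nP, nQ; split => //; split; first by split => //; apply: fixes_ends_cat.
have [aP bP aQ bQ ab] := ends.
have bG : (b, b) \in letter_map (P ++ nP) (Q ++ nQ) l.
  by apply: fix_letter_map; rewrite mem_cat ?bP ?bQ.
exists j; rewrite co; split => // c /imgs [e ees ce]; have [je eb _] := Hes e ees.
have [y ey Osy] := H e ees; have ltey : lt e y by apply: (moves_onP _ _ _ _ inc') ey je eb.
exists y; split.
- rewrite weval_cons (weval_sub pP pQ pP' pQ' (@pext_cat P nP) (@pext_cat Q nQ) ce) /=.
  exact/act_letterP.
- exact: ltM_trans je ltey.
- by rewrite -(partial_iso_fix_lt (partial_iso_letter_map l pP' pQ') bG ey).2.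
- by move=> x; rewrite co => xco ax xb; apply: Osy; rewrite mem_filter ax xb xco.
Qed.

Lemma push_same l a b j (C : pred M) W (es : seq M) P Q :
  piso P -> piso Q -> fixes_ends P Q a b ->
  monotone_chain (letter_gen P Q l) a b j -> monotone_chain (letter_cogen P Q l) a b a ->
  increasing_on (letter_map P Q l) j b ->
  (forall c, C c -> exists2 e, e \in es & weval W P Q c = Some e) ->
  (forall e, e \in es -> [/\ lt j e, lt e b & above_cogen P Q l a b e]) ->
  exists nP nQ, inside a b (nP ++ nQ) /\
    liberation_invariant a b C (l :: W) (P ++ nP) (Q ++ nQ).
Proof.
move=> pP pQ ends ch co_ch inc imgs Hes.
apply: (invariant_push (j := j) (es := es)) => // e /Hes [je eb above].
have [_ bP _ bQ _] := ends; split => //.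
apply: (liftable_increasing (partial_iso_letter_map l pP pQ) (fix_letter_map l bP bQ) inc je eb).
by move=> s; rewrite mem_filter => /andP [/andP [as_ sb] sco]; apply: above.
Qed.

Lemma push_switch l a b j (C : pred M) W (es : seq M) P Q :
  piso P -> piso Q -> fixes_ends P Q a b -> leM a j ->
  monotone_chain (letter_gen P Q l) a b a -> monotone_chain (letter_cogen P Q l) a b j ->
  (forall c, C c -> exists2 e, e \in es & weval W P Q c = Some e) ->
  (forall e, e \in es -> [/\ lt j e, lt e b &
     forall x, x \in pts (letter_gen P Q l) -> lt a x -> lt x b -> lt x e]) ->
  exists nP nQ, inside a b (nP ++ nQ) /\
    liberation_invariant a b C (l :: W) (P ++ nP) (Q ++ nQ).
Proof.
move=> pP pQ ends aj ch co_ch imgs Hes.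
have Hes' e : e \in es -> [/\ lt a e, lt e b &
    forall x, x \in pts (letter_gen P Q l) -> lt a x -> lt x b -> lt x e].
  by move=> /Hes [je eb above]; split => //; apply: leM_ltM_trans aj je.
have [f [[pP1 pQ1] [af fb] fe ch1 above1]] := insert_fixed_point pP pQ ends ch Hes'.
set P1 := P ++ _ in pP1 ch1 above1; set Q1 := Q ++ _ in pQ1 ch1 above1.
have [aP bP aQ bQ ab] := ends; have ends1 : fixes_ends P1 Q1 a b by apply: fixes_ends_cat.
have co1 : letter_cogen P1 Q1 l = letter_cogen P Q l by apply: letter_cogen_ext.
have bG : (b, b) \in letter_map P1 Q1 l by apply: fix_letter_map; rewrite mem_cat ?bP ?bQ.
have imgs1 c : C c -> exists2 e, e \in es & weval W P1 Q1 c = Some e.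
  move=> /imgs [e ees ce]; exists e => //.
  exact: weval_sub pP pQ pP1 pQ1 (@pext_cat P _) (@pext_cat Q _) ce.
have Hes1 e : e \in es ->
    [/\ lt f e, lt e b & liftable (letter_map P1 Q1 l) (cogen_inside P1 Q1 l a b) e].
  move=> ees; have [_ eb _] := Hes e ees; split; rewrite ?fe //; right; split.
    by apply/negP => /domP [w /above1 /(_ (fe e ees))]; rewrite /leM eb.
  move=> z w zw ez; have bz := above1 _ _ zw (ltM_trans (fe e ees) ez).
  have bw : leM b w by have [<- _] := partial_iso_fix_leM (partial_iso_letter_map l pP1 pQ1) bG zw.
  split; first exact: ltM_leM_trans eb bw.
  by move=> s; rewrite mem_filter => /andP [/andP [_ sb] _]; apply: ltM_leM_trans sb bw.
have co_ch1 : monotone_chain (letter_cogen P1 Q1 l) a b a.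
  by rewrite co1; apply: monotone_chain_start co_ch.
have [nP [nQ [ins inv]]] :=
  invariant_push pP1 pQ1 ends1 ch1 co_ch1 (moves_on_vacuous lt above1) imgs1 Hes1.
have ins' := inside_cat2 (inside_ext l af fb af fb) ins.
by exists (ext_p l f f ++ nP), (ext_q l f f ++ nQ); move: ins'; rewrite !catA.
Qed.

Lemma invariant_cons a b (C : pred M) (cs : seq M) l W P Q :
  (forall c, C c -> c \in cs) -> reduced (l :: W) -> liberation_invariant a b C W P Q ->
  exists nP nQ, inside a b (nP ++ nQ) /\
    liberation_invariant a b C (l :: W) (P ++ nP) (Q ++ nQ).
Proof.
move=> Ccs + [[pP pQ ends]]; case: W => // l0 W red [j [ch co_ch inc imgs]].
set es := pmap (weval (l0 :: W) P Q) [seq c <- cs | C c].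
have imgs_es c : C c -> exists2 e, e \in es & weval (l0 :: W) P Q c = Some e.
  move=> Cc; have [e [ce _ _ _]] := imgs c Cc; exists e => //.
  by rewrite mem_pmap; apply/mapP; exists c; rewrite ?mem_filter ?Cc ?Ccs.
have es_props e : e \in es -> [/\ lt j e, lt e b & above_cogen P Q l0 a b e].
  rewrite mem_pmap => /mapP [c]; rewrite mem_filter => /andP [Cc _] ce.
  by have [e' [ce' ? ? ?]] := imgs c Cc; move: ce'; rewrite -ce => -[->].
have [aP _ aQ _ _] := ends.
have [_ _ aj _ _] := monotone_chain_bounds (fix_letter_gen l0 aP aQ) ch.
case: (eqVneq l.1 l0.1) => [/(reduced_same_gen red) ll0|ll0].
  by subst l0; apply: push_same es_props.
have [eg ec] := letter_gen_cogen P Q ll0.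
by apply: (push_switch (j := j) pP pQ ends aj) imgs_es _; rewrite ?eg ?ec.
Qed.

Definition essential p q a b c := ess lt (restr lt p a b) c || ess lt (restr lt q a b) c.

Lemma essential_bounds p q P Q a b c : piso P -> piso Q -> pext P p -> pext Q q ->
  fixes_ends p q a b -> essential p q a b c -> [/\ lt a c, lt c b & c \in pts p ++ pts q].
Proof.
move=> pP pQ pP_ qQ [ap bp aq bq ab] /orP [h|h].
  by have [? ? cp] := ess_restr pP pP_ ap bp (ltMW ab) h; rewrite mem_cat cp.
by have [? ? cq] := ess_restr pQ qQ aq bq (ltMW ab) h; rewrite mem_cat cq orbT.
Qed.

(* Condition (v) of liberation, read on the generator [Q] of the leading letter [t^n]. *)
Lemma t_interval_of_elib Q a b j (n : int) : piso Q -> (b, b) \in Q -> n != 0 ->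
  (0 < n -> p_increasing lt (restr lt Q a b) j b) ->
  (n < 0 -> p_decreasing lt (restr lt Q a b) j b) ->
  [/\ (j, j) \in Q, leM a j, leM j b & increasing_on (if n < 0 then pinv Q else Q) j b].
Proof.
move=> pQ bQ; case: ltrgt0P => // _ _ inc dec.
  have [/dom_restr /andP [aj jb] _] := inc isT.
  by have [jQ _ _ _ m] := p_moves_restr pQ (inc isT).
have [/dom_restr /andP [aj jb] _] := dec isT.
by have [jQ _ _ _ m] := p_moves_restr pQ (dec isT); rewrite moves_on_pinv.
Qed.

Lemma elib_of_t_interval Q a b j (n : int) : piso Q -> (j, j) \in Q -> (b, b) \in Q ->
  leM a j -> leM j b -> increasing_on (if n < 0 then pinv Q else Q) j b ->
  (0 < n -> p_increasing lt (restr lt Q a b) j b) /\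
  (n < 0 -> p_decreasing lt (restr lt Q a b) j b).
Proof.
move=> pQ jQ bQ aj jb; case: ltrgt0P => // _ m; split => // _.
  exact: moves_on_restr pQ jQ bQ aj jb (leMxx b) m.
by move: m; rewrite moves_on_pinv // => m; apply: moves_on_restr pQ jQ bQ aj jb (leMxx b) m.
Qed.

Lemma invariant_of_elib p q P Q w a b : piso P -> piso Q -> pext P p -> pext Q q ->
  fixes_ends p q a b ->
  elib d lt (restr lt p a b) (restr lt q a b) (restr lt P a b) (restr lt Q a b) w ->
  liberation_invariant a b (essential p q a b) w P Q.
Proof.
move=> pP pQ pP_ qQ ends [_ [_ [_ [_ [infP [infQ [_ [_ [_ [_ [_ [n [v [n0 [ew [iv1 [iv2
  [j [j2 [j2max [hv [inc dec]]]]]]]]]]]]]]]]]]]]]].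
have [ap bp aq bq ab] := ends.
have aP := pP_ _ ap; have bP := pP_ _ bp; have aQ := qQ _ aq; have bQ := qQ _ bq.
have j2b : j2 = b by apply: is_dmax_restr_eq j2max; rewrite ?ltMW.
subst j2; have [jQ aj jb incQ] := t_interval_of_elib pQ bQ n0 inc dec.
have [w' ew'] := tpow_cons v n0; rewrite ew' in ew; subst w.
split; first by split.
exists j; split => //.
- exact: monotone_chain_through jQ aj jb (monotone_chain_of_informative pQ aQ bQ ab infQ).
- exact: monotone_chain_of_informative pP aP bP ab infP.
move=> c Cc; have [e ce] := iv1 c Cc; have [je eb] := hv c e Cc ce.
exists e; split => //; first exact: weval_restr_sub ce.
(* By (iv) the image of the least essential point is above [P], and words preserve [lt]. *)
set cs := [seq c <- pts p ++ pts q | essential p q a b c].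
have Ccs c' : essential p q a b c' -> c' \in cs.
  by move=> Cc'; rewrite mem_filter Cc'; have [] := essential_bounds pP pQ pP_ qQ ends Cc'.
have cs0 : cs != [::] by apply: contraTneq (Ccs c Cc) => ->.
have [c0 /[1!mem_filter] /andP [Cc0 _] min] := exists_minimal cs0.
have [e0 c0e0] := iv1 c0 Cc0.
have min' c' : essential p q a b c' -> (c' == c0) || lt c0 c'.
  by move=> /Ccs /min; rewrite eq_sym -leM_eqVlt.
move=> x xP ax xb; have xe0 := iv2 c0 Cc0 min' e0 c0e0 x (essI pP aP bP xP ax xb).
have := min c (Ccs c Cc); rewrite leM_eqVlt => /orP [/eqP c0c|c0c].
  by move: c0e0; rewrite c0c ce => -[->].
apply: ltM_trans xe0 (weval_lt _ _ c0e0 ce c0c); exact: partial_iso_restr.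
Qed.

Lemma elib_of_invariant p q P Q W a b (n : int) v : pext P p -> pext Q q ->
  fixes_ends p q a b -> liberation_invariant a b (essential p q a b) W P Q ->
  reduced W -> n != 0 -> W = tpow n ++ v ->
  elib d lt (restr lt p a b) (restr lt q a b) (restr lt P a b) (restr lt Q a b) W.
Proof.
move=> pP_ qQ ends [[pP pQ endsPQ] inv] red n0 eW.
have [w' ew'] := tpow_cons v n0; rewrite ew' in eW; subst W.
have [j [ch co_ch inc imgs]] := inv.
have [ap bp aq bq ab] := ends; have [aP bP aQ bQ _] := endsPQ.
have [jQ _ aj jb _] := monotone_chain_bounds aQ ch.
have img_restr c e : essential p q a b c ->
    weval ((true, n < 0) :: w') (restr lt P a b) (restr lt Q a b) c = Some e ->
    [/\ lt j e, lt e b & forall x, x \in pts P -> lt a x -> lt x b -> lt x e].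
  move=> Cc /(weval_restr_sub pP pQ); have [e' [-> je' e'b above]] := imgs c Cc.
  by move=> -[<-].
have min_a g : (a, a) \in g -> is_dmin lt (restr lt g a b) a.
  by move/is_dmin_restr; apply; apply: ltMW.
have max_b g : (b, b) \in g -> is_dmax lt (restr lt g a b) b.
  by move/is_dmax_restr; apply; apply: ltMW.
split; first exact: partial_iso_restr.
split; first exact: partial_iso_restr.
split; first exact: pext_restr.
split; first exact: pext_restr.
split; first exact: informative_restr pP aP co_ch.
split; first exact: informative_restr pQ aQ (monotone_chain_start ch).
split; first by exists a; rewrite !min_a.
split; first by exists a; rewrite !min_a.
split; first by exists b; rewrite !max_b.
split; first by exists b; rewrite !max_b.
split => //; exists n, v; split => //; split; first by rewrite ew'.
split.
  move=> c Cc; have [e [ce _ _ _]] := imgs c Cc; exists e.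
  have [ac cb _] := essential_bounds pP pQ pP_ qQ ends Cc.
  exact: weval_restr pP pQ aP bP aQ bQ (ltMW ac) (ltMW cb) ce.
split.
  move=> c0 Cc0 _ e0 c0e0 x /(ess_restr pP (fun _ h => h) aP bP (ltMW ab)) [ax xb xP].
  by have [_ _ ->] := img_restr _ _ Cc0 c0e0.
exists j, b; split; first exact: max_b.
split; first by move=> c e Cc /(img_restr _ _ Cc) [].
exact: elib_of_t_interval pQ jQ bQ aj jb inc.
Qed.

Lemma elib_prepend p q P Q w u a b : piso P -> piso Q -> pext P p -> pext Q q ->
  fixes_ends p q a b ->
  elib d lt (restr lt p a b) (restr lt q a b) (restr lt P a b) (restr lt Q a b) w ->
  reduced (u ++ w) -> (u = [::] \/ exists (n : int) (v : word), n != 0 /\ u = tpow n ++ v) ->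
  exists nP nQ, [/\ inside a b (nP ++ nQ), piso (P ++ nP), piso (Q ++ nQ) &
    elib d lt (restr lt p a b) (restr lt q a b) (restr lt (P ++ nP) a b) (restr lt (Q ++ nQ) a b)
      (u ++ w)].
Proof.
move=> pP pQ pP_ qQ ends lib red [->|[n [v [n0 eu]]]]; first by exists [::], [::]; rewrite !cats0.
have Ccs c : essential p q a b c -> c \in pts p ++ pts q.
  by case/(essential_bounds pP pQ pP_ qQ ends).
have inv u' : reduced (u' ++ w) -> exists nP nQ, inside a b (nP ++ nQ) /\
    liberation_invariant a b (essential p q a b) (u' ++ w) (P ++ nP) (Q ++ nQ).
  elim: u' => [|l u' IH] red'.
    by exists [::], [::]; rewrite !cats0; split; last exact: invariant_of_elib lib.
  have [nP [nQ [ins inv]]] := IH (reduced_behead red').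
  have [nP' [nQ' [ins' inv']]] := invariant_cons Ccs red' inv.
  by exists (nP ++ nP'), (nQ ++ nQ'); split; [apply: inside_cat2|rewrite !catA].
have [nP [nQ [ins inv_u]]] := inv u red; have [[pP' pQ' _] _] := inv_u.
exists nP, nQ; split => //.
apply: (elib_of_invariant (v := v ++ w) _ _ ends inv_u red n0); last by rewrite eu catA.
  by move=> x /pP_ xP; rewrite mem_cat xP.
by move=> x /qQ xQ; rewrite mem_cat xQ.
Qed.

End OneInterval.

(** * All gaps at once *)

Section AllIntervals.
Implicit Types (p q : pgraph M) (ps : seq (M * M)).

Definition consec_fixb p q a b := [&& fixb p a, fixb q a, fixb p b, fixb q b &
  lt a b && all (fun c => ~~ [&& fixb p c, fixb q c, lt a c & lt c b]) (dom p)].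

Lemma consec_fixP p q a b : reflect (consec_fix lt p q a b) (consec_fixb p q a b).
Proof.
apply: (iffP and5P) => [[fpa fqa fpb fqb /andP [ab /allP H]]|[fpa [fqa [fpb [fqb [ab H]]]]]].
  do 5 (split => //); move=> c fpc fqc [ac cb].
  by move: (H c (mem_dom (fixb_mem fpc))); rewrite fpc fqc ac cb.
split => //; rewrite ab; apply/allP => c _; apply/negP => /and4P [fpc fqc ac cb].
exact: H c fpc fqc (conj ac cb).
Qed.

Lemma fixes_ends_consec p q a b : consec_fix lt p q a b -> fixes_ends p q a b.
Proof. by case=> /fixb_mem ? [/fixb_mem ? [/fixb_mem ? [/fixb_mem ? [? _]]]]. Qed.

Lemma consec_fix_disjoint p q a b a' b' x :
  consec_fix lt p q a b -> consec_fix lt p q a' b' ->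
  lt a x -> lt x b -> leM a' x -> leM x b' -> (a, b) = (a', b').
Proof.
move=> [fpa [fqa [fpb [fqb [ab H]]]]] [fpa' [fqa' [fpb' [fqb' [ab' H']]]]] ax xb a'x xb'.
have between y y' : y != y' -> lt y y' \/ lt y' y by move/ltM_total/orP.
have aa' : a = a'.
  apply/eqP/negP => /negP /between [aa'|a'a].
    by apply: (H a' fpa' fqa'); split => //; apply: leM_ltM_trans a'x xb.
  by apply: (H' a fpa fqa); split => //; apply: ltM_leM_trans ax xb'.
subst a'; congr (_, _); apply/eqP/negP => /negP /between [bb'|b'b].
  exact: H' b fpb fqb (conj ab bb').
exact: H b' fpb' fqb' (conj ab' b'b).
Qed.

Definition in_gap p q ps (pr : M * M) :=
  has (fun ab => [&& consec_fixb p q ab.1 ab.2, lt ab.1 pr.1 & lt pr.1 ab.2]) ps.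

Lemma restr_cat_gap p q ps g n a b : consec_fix lt p q a b -> (a, b) \notin ps ->
  all (in_gap p q ps) n -> restr lt (g ++ n) a b = restr lt g a b.
Proof.
move=> cab abps /allP gaps; apply: restr_cat_out => pr /gaps /hasP [[a0 b0] ab0].
case/and3P => /consec_fixP c0 a0pr prb0; apply/negP => /andP [apr prb].
by move: abps; rewrite -(consec_fix_disjoint c0 cab a0pr prb0 apr prb) ab0.
Qed.

Lemma inside_in_gap p q ps a b n : consec_fix lt p q a b -> (a, b) \in ps -> inside a b n ->
  all (in_gap p q ps) n.
Proof.
move=> /consec_fixP cab abps /allP ins; apply/allP => pr /ins /and4P [apr prb _ _].
by apply/hasP; exists (a, b); rewrite //= cab apr prb.
Qed.

Lemma extend_on_gaps p q p' q' w u ps :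
  piso p' -> piso q' -> pext p' p -> pext q' q ->
  (forall a b, consec_fix lt p q a b ->
     elib d lt (restr lt p a b) (restr lt q a b) (restr lt p' a b) (restr lt q' a b) w) ->
  reduced (u ++ w) -> (u = [::] \/ exists (n : int) (v : word), n != 0 /\ u = tpow n ++ v) ->
  uniq ps ->
  exists nP nQ, [/\ piso (p' ++ nP), piso (q' ++ nQ), all (in_gap p q ps) (nP ++ nQ) &
    forall a b, consec_fix lt p q a b -> (a, b) \in ps ->
      elib d lt (restr lt p a b) (restr lt q a b) (restr lt (p' ++ nP) a b)
        (restr lt (q' ++ nQ) a b) (u ++ w)].
Proof.
move=> pp' pq' p'p q'q lib red hu; elim: ps => [|[a b] ps IH] /=.
  by move=> _; exists [::], [::]; rewrite !cats0.
case/andP => abps /IH [nP [nQ [pP pQ gaps H]]].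
have gaps' : all (in_gap p q ((a, b) :: ps)) (nP ++ nQ).
  by apply: sub_all gaps => pr /= ->; rewrite orbT.
case: (consec_fixP p q a b) => [cab|ncab]; last first.
  exists nP, nQ; split => // a0 b0 c0; rewrite inE => /orP [/eqP [ea eb]|]; last exact: H.
  by case: ncab; rewrite -ea -eb.
move: (gaps); rewrite all_cat => /andP [gapP gapQ].
have sP : pext (p' ++ nP) p by move=> x /p'p xp; rewrite mem_cat xp.
have sQ : pext (q' ++ nQ) q by move=> x /q'q xq; rewrite mem_cat xq.
have lib_ab : elib d lt (restr lt p a b) (restr lt q a b) (restr lt (p' ++ nP) a b)
    (restr lt (q' ++ nQ) a b) w by rewrite !(restr_cat_gap _ cab abps) //; apply: lib.
have [nP' [nQ' [ins pP' pQ' lib']]] :=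
  elib_prepend pP pQ sP sQ (fixes_ends_consec cab) lib_ab red hu.
have gap_ab : all (in_gap p q [:: (a, b)]) (nP' ++ nQ').
  exact: inside_in_gap cab (mem_head _ _) ins.
exists (nP ++ nP'), (nQ ++ nQ'); rewrite !catA; split => //.
  move: gaps' (inside_in_gap cab (mem_head _ ps) ins); rewrite !all_cat.
  by case/andP => -> -> /andP [-> ->].
move=> a0 b0 c0; rewrite inE => /orP [/eqP [-> ->] //|a0ps].
have a0ab : (a0, b0) \notin [:: (a, b)] by rewrite inE; apply: contraNneq abps => <-.
move: gap_ab; rewrite all_cat => /andP [gP' gQ'].
by rewrite (restr_cat_gap _ c0 a0ab gP') (restr_cat_gap _ c0 a0ab gQ'); apply: H.
Qed.

Lemma liberates_p_prepend p q p' q' w u :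
  liberates_p d lt p q p' q' w -> reduced (u ++ w) ->
  (u = [::] \/ exists (n : int) (v : word), n != 0 /\ u = tpow n ++ v) ->
  exists p'' q'', piso p'' /\ piso q'' /\ pext p'' p' /\ pext q'' q' /\
    liberates_p d lt p q p'' q'' (u ++ w).
Proof.
move=> [pp' [pq' [p'p [q'q [minp [minq [maxp [maxq lib]]]]]]]] red hu.
set ps := undup [seq (x, y) | x <- dom p, y <- dom p].
have [nP [nQ [pP pQ gaps H]]] :=
  extend_on_gaps (ps := ps) pp' pq' p'p q'q lib red hu (undup_uniq _).
have gap_ends pr : pr \in nP ++ nQ -> exists a b,
    [/\ (a \in dom p) && (a \in dom q), (b \in dom p) && (b \in dom q), lt a pr.1 & lt pr.1 b].
  move=> /(allP gaps) /hasP [[a b] _ /and3P [/consec_fixP [fpa [fqa [fpb [fqb _]]]] apr prb]].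
  by exists a, b; rewrite !(mem_dom (fixb_mem _)).
have min_cat g n r : (forall x, x \in dom p -> x \in dom q -> x \in dom r) ->
    same_min lt g r -> {subset n <= nP ++ nQ} -> same_min lt (g ++ n) r.
  move=> dr [m [mg mr]] nN; exists m; split => //; apply: is_dmin_cat mg _ => pr /nN.
  case/gap_ends => a [b [/andP [ap aq] _ apr _]].
  by case/andP: mr => _ /allP /(_ _ (dr _ ap aq)) /orP [/eqP <- //|ma]; apply: ltM_trans ma apr.
have max_cat g n r : (forall x, x \in dom p -> x \in dom q -> x \in dom r) ->
    same_max lt g r -> {subset n <= nP ++ nQ} -> same_max lt (g ++ n) r.
  move=> dr [m [mg mr]] nN; exists m; split => //; apply: is_dmax_cat mg _ => pr /nN.
  case/gap_ends => a [b [_ /andP [bp bq] _ prb]].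
  by case/andP: mr => _ /allP /(_ _ (dr _ bp bq)) /orP [/eqP <- //|bm]; apply: ltM_trans prb bm.
have inP pr : pr \in nP -> pr \in nP ++ nQ by rewrite mem_cat => ->.
have inQ pr : pr \in nQ -> pr \in nP ++ nQ by rewrite mem_cat => ->; rewrite orbT.
exists (p' ++ nP), (q' ++ nQ).
do 2 (split; first by []); do 2 (split; first exact: pext_cat); do 2 (split; first by []).
split; first by move=> x /p'p xp; rewrite mem_cat xp.
split; first by move=> x /q'q xq; rewrite mem_cat xq.
split; first exact: min_cat minp inP.
split; first exact: min_cat minq inQ.
split; first exact: max_cat maxp inP.
split; first exact: max_cat maxq inQ.
move=> a b cab; apply: H => //; rewrite mem_undup; apply: allpairs_f;
by case: cab => /fixb_mem/mem_dom ? [_ [/fixb_mem/mem_dom ? _]].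
Qed.

End AllIntervals.

End OrderedMetricSpace.

Section Symmetry.
Variables (M : eqType) (d : M -> M -> rat) (lt : rel M).
Implicit Types (p q : pgraph M).

Lemma consec_fix_sym p q a b : consec_fix lt p q a b -> consec_fix lt q p a b.
Proof. by case=> fpa [fqa [fpb [fqb [ab H]]]]; do 5 (split => //); move=> c /H; apply. Qed.

Lemma liberates_q_swap p q p' q' w :
  liberates_q d lt p q p' q' w <-> liberates_p d lt q p q' p' (swapw w).
Proof.
split=> [] [pp' [pq' [p'p [q'q [minp [minq [maxp [maxq H]]]]]]]];
by do 8 (split => //); move=> a b /consec_fix_sym /H.
Qed.

End Symmetry.

Theorem lemma5p3 (M : eqType) (d : M -> M -> rat) (lt : rel M)
  (HM : is_QUo d lt) (p q p' q' : seq (M * M)) (w u : word) :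
  partial_iso d lt p -> partial_iso d lt q ->
  piecewise_elementary lt p q ->
  reduced u -> reduced (u ++ w) ->
  (liberates_p d lt p q p' q' w ->
     (u = [::] \/ exists (n : int) (v : word), n != 0 /\ u = tpow n ++ v) ->
     exists p'' q'', partial_iso d lt p'' /\ partial_iso d lt q'' /\
       pext p'' p' /\ pext q'' q' /\ liberates_p d lt p q p'' q'' (u ++ w)) /\
  (liberates_q d lt p q p' q' w ->
     (u = [::] \/ exists (m : int) (v : word), m != 0 /\ u = spow m ++ v) ->
     exists p'' q'', partial_iso d lt p'' /\ partial_iso d lt q'' /\
       pext p'' p' /\ pext q'' q' /\ liberates_q d lt p q p'' q'' (u ++ w)).
Proof.
case: HM => metric order ext _ _ _ _ _ red; split => [lib hu|lib hu].
  exact: liberates_p_prepend lib red hu.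
have red' : reduced (swapw u ++ swapw w) by rewrite -swapw_cat reduced_swapw.
have hu' : swapw u = [::] \/ exists (n : int) (v : word), n != 0 /\ swapw u = tpow n ++ v.
  case: hu => [->|[m [v [m0 ->]]]]; [by left|right].
  by exists m, (swapw v); rewrite swapw_cat swapw_spow.
have [q'' [p'' [pq'' [pp'' [q''q' [p''p' lib'']]]]]] :=
  liberates_p_prepend order metric ext (proj1 (liberates_q_swap d lt p q p' q' w) lib) red' hu'.
exists p'', q''; do 4 (split => //).
by apply/liberates_q_swap; rewrite swapw_cat.
Qed.
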